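(* Let $\mathscr{A}=\{A_1,\ldots,A_r\}$ be an irreducible set of real $d\times d$ matrices, let $\|\cdot\|$ be any norm on $\mathbb{R}^d$, and let $\chi_p(\mathscr{A})$ denote the $p$-measure of irreducibility with respect to this norm. Then for every integer $n\ge 1$ and every integer $p\ge d-1$, \[ \rho(\mathscr{A})\le \|\mathscr{A}^n\|^{1/n}\le \big(\eta_p(\mathscr{A})\big)^{1/n}\rho(\mathscr{A}),\qquad\text{where }\ \eta_p(\mathscr{A})=\frac{\max\{1,\rho(\mathscr{A})^p\}}{\chi_p(\mathscr{A})}, \] and consequently \[ \big(\nu_p(\mathscr{A})\big)^{-1/n}\|\mathscr{A}^n\|^{1/n}\le \rho(\mathscr{A})\le \|\mathscr{A}^n\|^{1/n},\qquad\text{where }\ \nu_p(\mathscr{A})=\frac{\max\{1,\|\mathscr{A}\|^p\}}{\chi_p(\mathscr{A})}. \]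
   Context: A finite set $\mathscr{A}$ of real $d\times d$ matrices is irreducible if the matrices in $\mathscr{A}$ have no common invariant subspace other than $\{0\}$ and $\mathbb{R}^d$. For $n\ge1$, $\mathscr{A}^n$ is the set of all products $A_{i_n}\cdots A_{i_1}$ with $A_{i_j}\in\mathscr{A}$, and $\mathscr{A}^0=\{I\}$. For a norm $\|\cdot\|$ on $\mathbb{R}^d$, matrices carry the induced operator norm and $\|\mathscr{A}^n\|=\max_{A\in\mathscr{A}^n}\|A\|$ (in particular $\|\mathscr{A}\|=\max_i\|A_i\|$). The joint spectral radius is $\rho(\mathscr{A})=\limsup_{n\to\infty}\|\mathscr{A}^n\|^{1/n}$ (independent of the norm). For $p\ge1$, $\mathscr{A}_p=\bigcup_{k=0}^p\mathscr{A}^k$, and $\mathscr{A}_p(x)=\{Ax: A\in\mathscr{A}_p\}$. $\mathbf{S}(t)$ is the closed ball of radius $t$ centered at $0$ in the norm $\|\cdot\|$. The $p$-measure of irreducibility of $\mathscr{A}$ with respect to $\|\cdot\|$ is \[ \chi_p(\mathscr{A})=\inf_{x\in\mathbb{R}^d,\ \|x\|=1}\ \sup\{t\ge 0:\ \mathbf{S}(t)\subseteq \mathrm{conv}(\mathscr{A}_p(x)\cup\mathscr{A}_p(-x))\}. \] (For $p\ge d-1$, $\chi_p(\mathscr{A})>0$ if and only if $\mathscr{A}$ is irreducible.) *)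

From Stdlib Require Import Reals ClassicalEpsilon.
From mathcomp Require Import ssreflect ssrfun ssrbool eqtype ssrnat seq fintype bigop.

Set Implicit Arguments.
Unset Strict Implicit.

Local Open Scope R_scope.

Definition vec (d : nat) := 'I_d -> R.
Definition mat (d : nat) := 'I_d -> 'I_d -> R.

Definition vzero {d} : vec d := fun _ => 0.
Definition vadd {d} (x y : vec d) : vec d := fun i => x i + y i.
Definition vscale {d} (c : R) (x : vec d) : vec d := fun i => c * x i.
Definition vopp {d} (x : vec d) : vec d := fun i => - x i.

Definition mulmv {d} (M : mat d) (x : vec d) : vec d :=
  fun i => \big[Rplus/0]_(j < d) (M i j * x j).
Definition mulmm {d} (M P : mat d) : mat d :=
  fun i k => \big[Rplus/0]_(j < d) (M i j * P j k).
Definition idm {d} : mat d := fun i j => if i == j then 1 else 0.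

Record is_norm {d} (N : vec d -> R) : Prop := {
  norm_nonneg : forall x, 0 <= N x;
  norm_def : forall x, N x = 0 -> x = vzero;
  norm_hom : forall c x, N (vscale c x) = Rabs c * N x;
  norm_triangle : forall x y, N (vadd x y) <= N x + N y }.

(* supremum / infimum of a set of reals (chosen least upper bound; all sets to
   which they are applied below are nonempty and bounded) *)
Definition sup (E : R -> Prop) : R :=
  epsilon (inhabits 0) (fun l => is_lub E l).
Definition inf (E : R -> Prop) : R := - sup (fun t => E (- t)).

Definition limsup (u : nat -> R) : R :=
  inf (fun t => exists n, t = sup (fun s => exists k, (n <= k)%nat /\ s = u k)).

Definition Rroot (n : nat) (t : R) : R :=
  if Rle_dec t 0 then 0 else Rpower t (/ INR n).

Definition opnorm {d} (N : vec d -> R) (M : mat d) : R :=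
  sup (fun t => exists x, N x = 1 /\ t = N (mulmv M x)).

(* prods A k M : M belongs to A^k (products A_{i_k} ... A_{i_1}); A^0 = {I} *)
Fixpoint prods {d r} (A : 'I_r -> mat d) (k : nat) (M : mat d) : Prop :=
  match k with
  | O => M = idm
  | S k' => exists i M', prods A k' M' /\ M = mulmm (A i) M'
  end.

(* ||A^n|| = max over products of length n *)
Definition setnorm_pow {d r} (N : vec d -> R) (A : 'I_r -> mat d) (n : nat) : R :=
  sup (fun t => exists M, prods A n M /\ t = opnorm N M).

(* ||A|| = max_i ||A_i|| *)
Definition setnorm {d r} (N : vec d -> R) (A : 'I_r -> mat d) : R :=
  sup (fun t => exists i, t = opnorm N (A i)).

Definition jsr {d r} (N : vec d -> R) (A : 'I_r -> mat d) : R :=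
  limsup (fun n => Rroot n (setnorm_pow N A n)).

Definition is_subspace {d} (V : vec d -> Prop) : Prop :=
  V vzero /\ (forall x y, V x -> V y -> V (vadd x y)) /\
  (forall c x, V x -> V (vscale c x)).

Definition irreducible {d r} (A : 'I_r -> mat d) : Prop :=
  forall V : vec d -> Prop, is_subspace V ->
    (forall i x, V x -> V (mulmv (A i) x)) ->
    (forall x, V x -> x = vzero) \/ (forall x, V x).

Definition Ap {d r} (A : 'I_r -> mat d) (p : nat) (x : vec d) (y : vec d) : Prop :=
  exists k M, (k <= p)%nat /\ prods A k M /\ y = mulmv M x.

Fixpoint comb {d} (l : list (R * vec d)) : vec d :=
  match l with
  | nil => vzero
  | cons (w, s) l' => vadd (vscale w s) (comb l')
  end.
Fixpoint wsum {d} (l : list (R * vec d)) : R :=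
  match l with
  | nil => 0
  | cons (w, _) l' => w + wsum l'
  end.
Definition conv {d} (S : vec d -> Prop) (y : vec d) : Prop :=
  exists l : list (R * vec d),
    List.Forall (fun ws => 0 <= fst ws /\ S (snd ws)) l /\
    wsum l = 1 /\ y = comb l.

Definition chi {d r} (N : vec d -> R) (A : 'I_r -> mat d) (p : nat) : R :=
  inf (fun c => exists x, N x = 1 /\
        c = sup (fun t => 0 <= t /\
              forall y, N y <= t ->
                conv (fun z => Ap A p x z \/ Ap A p (vopp x) z) y)).

(* - rho <= ||A^n||^(1/n) follows from submultiplicativity of k |-> ||A^k||
     by a Fekete-type estimate ([jsr_le_rootA]).
   - chi > 0: by irreducibility the Krylov spaces span A_k(x) exhaust R^d by
     step d - 1 ([krylov_full]), so the Gram matrix of the vectors B x (B a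
     product of length <= p) is positive definite, uniformly in the unit x by
     compactness.  Inverting it writes every small y as a signed combination
     of the B x with total weight <= 1 ([uniform_absorption]).
   - Amplification: for t < chi and s < ||A^n||, every x <> 0 is mapped by a
     product M B (M of length n, B of length <= p) to norm > t s N(x)
     ([amplify]).  Iterating from a unit vector produces products of length
     between j n and j (n + p) of norm >= (t s)^j, whence
     t s <= max(rho^n, rho^(n+p)) ([chain_bound_eta]); trading B for a factor
     max(1, ||A||^p) keeps the lengths equal to j n ([chain_bound_nu]).
     Letting t -> chi, s -> ||A^n|| and taking n-th roots gives the theorem. *)

Set Warnings "-notation-overridden -ambiguous-paths -redundant-canonical-projection".
From Stdlib Require Import Reals Lra Lia ClassicalEpsilon FunctionalExtensionality PropExtensionality Classical.
From HB Require Import structures.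
From mathcomp Require Import all_boot ssralg matrix mxalgebra.
From mathcomp Require Import Rstruct.

Set Implicit Arguments.
Unset Strict Implicit.
Local Open Scope R_scope.

Lemma sup_is_lub (E : R -> Prop) :
  (exists x, E x) -> (exists b, forall x, E x -> x <= b) -> is_lub E (sup E).
Proof.
move=> [x hx] [b hb].
have [m hm] := completeness E (ex_intro _ b hb) (ex_intro _ x hx).
apply: (epsilon_spec (inhabits 0) (fun l => is_lub E l)); by exists m.
Qed.

Lemma sup_upper (E : R -> Prop) x :
  (exists b, forall x, E x -> x <= b) -> E x -> x <= sup E.
Proof. by move=> hb hx; have [h _] := sup_is_lub (ex_intro _ x hx) hb; apply: h. Qed.

Lemma sup_least (E : R -> Prop) b :
  (exists x, E x) -> (forall x, E x -> x <= b) -> sup E <= b.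
Proof. by move=> hx hb; have [_ h] := sup_is_lub hx (ex_intro _ b hb); apply: h. Qed.

Lemma sup_approx (E : R -> Prop) s :
  (exists x, E x) -> (exists b, forall x, E x -> x <= b) ->
  s < sup E -> exists x, E x /\ s < x.
Proof.
move=> hx hb hs; apply: NNPP => hn.
suff : sup E <= s by lra.
apply: sup_least => // y hy; apply: Rnot_lt_le => hys; apply: hn; by exists y.
Qed.

Lemma sup_ext (E F : R -> Prop) : (forall x, E x <-> F x) -> sup E = sup F.
Proof.
move=> h; have -> // : E = F.
by apply: functional_extensionality => x; apply: propositional_extensionality.
Qed.

Lemma inf_lower (E : R -> Prop) x :
  (exists b, forall x, E x -> b <= x) -> E x -> inf E <= x.
Proof.
move=> [b hb] hx; rewrite /inf.
suff : - x <= sup (fun t => E (- t)) by lra.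
apply: sup_upper; last by rewrite Ropp_involutive.
by exists (- b) => y hy; have := hb _ hy; lra.
Qed.

Lemma inf_greatest (E : R -> Prop) b :
  (exists x, E x) -> (forall x, E x -> b <= x) -> b <= inf E.
Proof.
move=> [x hx] hb; rewrite /inf.
suff : sup (fun t => E (- t)) <= - b by lra.
apply: sup_least; first by exists (- x); rewrite Ropp_involutive.
by move=> y hy; have := hb _ hy; lra.
Qed.

Lemma sumR_le (I : Type) (r : seq I) (P : pred I) (F G : I -> R) :
  (forall i, P i -> F i <= G i) ->
  \big[Rplus/0]_(i <- r | P i) F i <= \big[Rplus/0]_(i <- r | P i) G i.
Proof. by move=> h; apply: (big_ind2 (fun a b => a <= b)) => //; [lra | move=> *; lra]. Qed.

Lemma sumR_ge0 (I : Type) (r : seq I) (P : pred I) (F : I -> R) :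
  (forall i, P i -> 0 <= F i) -> 0 <= \big[Rplus/0]_(i <- r | P i) F i.
Proof. by move=> h; apply: (big_ind (fun a => 0 <= a)) => //; [lra | move=> *; lra]. Qed.

Lemma sumR_abs (I : Type) (r : seq I) (P : pred I) (F : I -> R) :
  Rabs (\big[Rplus/0]_(i <- r | P i) F i) <= \big[Rplus/0]_(i <- r | P i) Rabs (F i).
Proof.
apply: (big_ind2 (fun a b => Rabs a <= b)); first by rewrite Rabs_R0; lra.
  by move=> a b c e h1 h2; apply: Rle_trans (Rabs_triang _ _) _; lra.
by move=> *; lra.
Qed.

Lemma sumR_ge_term (T : Type) (l : list T) (f : T -> R) x :
  (forall y, 0 <= f y) -> List.In x l -> f x <= \big[Rplus/0]_(y <- l) f y.
Proof.
move=> h; elim: l => [//|a l IH] /= [<-|hx]; rewrite big_cons.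
  by have := @sumR_ge0 _ l xpredT f (fun y _ => h y); lra.
by have := IH hx; have := h a; lra.
Qed.

Lemma sumR_le_size (T : Type) (l : list T) (f : T -> R) c :
  (forall x, List.In x l -> f x <= c) -> \big[Rplus/0]_(x <- l) f x <= INR (size l) * c.
Proof.
elim: l => [|a l IH] h; first by rewrite big_nil /=; lra.
rewrite big_cons [size _]/= S_INR.
have := h a (or_introl erefl); have := IH (fun x hx => h x (or_intror hx)); lra.
Qed.

Lemma cv_const c : Un_cv (fun _ => c) c.
Proof. by move=> e he; exists 0%nat => k _; rewrite /Rdist Rminus_diag Rabs_R0; lra. Qed.

Lemma cv_sumR (I : Type) (r : seq I) (P : pred I) (F : nat -> I -> R) (G : I -> R) :
  (forall i, P i -> Un_cv (fun k => F k i) (G i)) ->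
  Un_cv (fun k => \big[Rplus/0]_(i <- r | P i) F k i) (\big[Rplus/0]_(i <- r | P i) G i).
Proof.
move=> h; elim: r => [|a r IH].
  by apply: (Un_cv_ext (fun _ => 0)) => [k|]; rewrite big_nil //; apply: cv_const.
rewrite big_cons; case ha: (P a).
  apply: (Un_cv_ext (fun k => F k a + \big[Rplus/0]_(i <- r | P i) F k i)).
    by move=> k; rewrite big_cons ha.
  by apply: CV_plus => //; apply: h.
by apply: (Un_cv_ext (fun k => \big[Rplus/0]_(i <- r | P i) F k i)) => // k; rewrite big_cons ha.
Qed.

Lemma In_mem (T : eqType) (x : T) (s : seq T) : x \in s -> List.In x s.
Proof. elim: s => [//|a s IH]; rewrite inE => /orP [/eqP ->|h]; [by left | right; exact: IH]. Qed.

Lemma In_map (T U : Type) (f : T -> U) (l : list T) y :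
  List.In y l -> List.In (f y) (map f l).
Proof. by elim: l => [//|a l IH] /= [->|h]; [left | right; apply: IH]. Qed.

Lemma In_map_inv (T U : Type) (f : T -> U) (l : list T) y :
  List.In y (map f l) -> exists x, List.In x l /\ y = f x.
Proof.
elim: l => [//|a l IH] /= [<-|h]; first by exists a; split => //; left.
by have [x [hx ->]] := IH h; exists x; split => //; right.
Qed.

Section Vectors.
Variable d : nat.
Implicit Types (x y z : vec d) (l : list (R * vec d)).

Lemma vext x y : (forall i, x i = y i) -> x = y.
Proof. exact: functional_extensionality. Qed.

Lemma vaddA : associative (@vadd d).
Proof. by move=> x y z; apply: vext => i; rewrite /vadd; lra. Qed.
Lemma vaddC : commutative (@vadd d).
Proof. by move=> x y; apply: vext => i; rewrite /vadd; lra. Qed.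
Lemma vadd0 : left_id vzero (@vadd d).
Proof. by move=> x; apply: vext => i; rewrite /vadd /vzero; lra. Qed.

Lemma vopp_scale x : vopp x = vscale (-1) x.
Proof. by apply: vext => i; rewrite /vopp /vscale; ring. Qed.

Lemma comb_coord l k : comb l k = \big[Rplus/0]_(ws <- l) (ws.1 * ws.2 k).
Proof.
elim: l => [|[w s] l IH] /=; first by rewrite big_nil.
by rewrite big_cons /vadd /vscale IH.
Qed.

Lemma wsum_big l : wsum l = \big[Rplus/0]_(ws <- l) ws.1.
Proof. by elim: l => [|[w s] l IH] /=; rewrite ?big_nil ?big_cons ?IH. Qed.

Lemma comb_cat l1 l2 : comb (l1 ++ l2) = vadd (comb l1) (comb l2).
Proof. by apply: vext => k; rewrite /vadd !comb_coord big_cat. Qed.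

Lemma wsum_cat l1 l2 : wsum (l1 ++ l2) = wsum l1 + wsum l2.
Proof. by rewrite !wsum_big big_cat. Qed.

Lemma comb_scale c l :
  comb (List.map (fun ws => (c * ws.1, ws.2)) l) = vscale c (comb l).
Proof.
apply: vext => k; rewrite /vscale !comb_coord big_distrr /=.
by elim: l => [|[w s] l IH] /=; rewrite ?big_nil ?big_cons ?IH //=; ring.
Qed.
End Vectors.

(* Vector addition is a commutative monoid law, so vectors can be summed
   with the bigop library; sums are computed coordinatewise. *)
HB.instance Definition _ (d : nat) :=
  Monoid.isComLaw.Build (vec d) vzero (@vadd d) (@vaddA d) (@vaddC d) (@vadd0 d).

Lemma big_vadd_coord (d : nat) (I : Type) (r : seq I) (P : pred I) (F : I -> vec d) k :
  (\big[vadd/vzero]_(i <- r | P i) F i) k = \big[Rplus/0]_(i <- r | P i) F i k.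
Proof. exact: (big_morph (fun v : vec d => v k)). Qed.

Section Matrices.
Variable d : nat.
Implicit Types (M P Q : mat d) (x y : vec d).

Lemma mext M P : (forall i j, M i j = P i j) -> M = P.
Proof.
by move=> h; apply: functional_extensionality => i; apply: functional_extensionality.
Qed.

Lemma mulmv_add M x y : mulmv M (vadd x y) = vadd (mulmv M x) (mulmv M y).
Proof. by apply: vext => i; rewrite /mulmv /vadd -big_split /=; apply: eq_bigr => j _; ring. Qed.

Lemma mulmv_scale M c x : mulmv M (vscale c x) = vscale c (mulmv M x).
Proof. by apply: vext => i; rewrite /mulmv /vscale big_distrr /=; apply: eq_bigr => j _; ring. Qed.

Lemma mulmv_opp M x : mulmv M (vopp x) = vopp (mulmv M x).
Proof. by rewrite !vopp_scale mulmv_scale. Qed.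

Lemma mulmv_zero M : mulmv M vzero = vzero.
Proof. by apply: vext => i; rewrite /mulmv /vzero big1 // => j _; ring. Qed.

Lemma mulmv_comb M (l : list (R * vec d)) :
  mulmv M (comb l) = comb (List.map (fun ws => (ws.1, mulmv M ws.2)) l).
Proof.
elim: l => [|[w s] l IH] /=; first exact: mulmv_zero.
by rewrite mulmv_add mulmv_scale IH.
Qed.

Lemma mulmvA M P x : mulmv (mulmm M P) x = mulmv M (mulmv P x).
Proof.
apply: vext => i; rewrite /mulmv /mulmm.
under eq_bigr => j _ do rewrite big_distrl.
rewrite exchange_big /=; apply: eq_bigr => l _; rewrite big_distrr /=.
by apply: eq_bigr => j _; ring.
Qed.

Lemma mulmmA M P Q : mulmm (mulmm M P) Q = mulmm M (mulmm P Q).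
Proof.
apply: mext => i k; rewrite /mulmm.
under eq_bigr => j _ do rewrite big_distrl.
rewrite exchange_big /=; apply: eq_bigr => l _; rewrite big_distrr /=.
by apply: eq_bigr => j _; ring.
Qed.

Lemma mulmv_id x : mulmv idm x = x.
Proof.
apply: vext => i; rewrite /mulmv /idm (bigD1 i) //= eqxx big1; first ring.
by move=> j /negPf hj; rewrite eq_sym hj; ring.
Qed.

Lemma mulmm_id_l M : mulmm idm M = M.
Proof.
apply: mext => i k; rewrite /mulmm /idm (bigD1 i) //= eqxx big1; first ring.
by move=> j /negPf hj; rewrite eq_sym hj; ring.
Qed.

Lemma mulmm_id_r M : mulmm M idm = M.
Proof.
apply: mext => i k; rewrite /mulmm /idm (bigD1 k) //= eqxx big1; first ring.
by move=> j /negPf hj; rewrite hj; ring.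
Qed.
End Matrices.

Lemma linear_dependence (d : nat) (v : 'I_d.+1 -> vec d) :
  exists c : 'I_d.+1 -> R, (exists i, c i <> 0) /\
    forall k : 'I_d, \big[Rplus/0]_(i < d.+1) (c i * v i k) = 0.
Proof.
pose M : 'M[R]_(d.+1, d) := (\matrix_(i, k) v i k)%R.
have kerM_nz : (kermx M != 0)%R.
  rewrite -mxrank_eq0 mxrank_ker subn_eq0 -ltnNge.
  exact: leq_ltn_trans (rank_leq_col M) (ltnSn d).
have [i hi] : exists i, (row i (kermx M) != 0)%R.
  apply/existsP; move: kerM_nz; apply: contraR; rewrite negb_exists => /forallP h.
  by apply/eqP/row_matrixP => i; rewrite row0; apply/eqP/negPn.
exists (fun j => kermx M i j); split.
  apply: NNPP => h; move/negP: hi; apply; apply/eqP/rowP => j; rewrite [LHS]mxE [RHS]mxE.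
  by apply: NNPP => hj; apply: h; exists j.
move=> k; have hrow : (row i (kermx M *m M) = 0)%R by rewrite mulmx_ker row0.
move: (congr1 (fun B : 'M_(1, d) => B ord0 k) hrow); rewrite row_mul !mxE => hk.
by rewrite -[RHS]hk; apply: eq_bigr => j _; rewrite !mxE.
Qed.

Section Products.
Variables d r : nat.
Variable A : 'I_r -> mat d.

Lemma prods_mul a b X Y : prods A a X -> prods A b Y -> prods A (a + b) (mulmm X Y).
Proof.
elim: a X => [|a IH] X /=; first by move=> -> hY; rewrite add0n mulmm_id_l.
move=> [i [X' [hX' ->]]] hY; exists i, (mulmm X' Y); split; first exact: IH.
by rewrite mulmmA.
Qed.

Lemma prods_split a b Q :
  prods A (a + b) Q -> exists X Y, prods A a X /\ prods A b Y /\ Q = mulmm X Y.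
Proof.
elim: a Q => [|a IH] Q /=.
  by move=> hQ; exists idm, Q; rewrite mulmm_id_l.
move=> [i [Q' [hQ' ->]]]; have [X [Y [hX [hY ->]]]] := IH _ hQ'.
by exists (mulmm (A i) X), Y; split; [exists i, X | rewrite mulmmA].
Qed.

Fixpoint prods_list (k : nat) : list (mat d) :=
  match k with
  | O => idm :: nil
  | S k => List.flat_map (fun M => List.map (fun i => mulmm (A i) M) (enum 'I_r)) (prods_list k)
  end.

Lemma prods_listP k M : List.In M (prods_list k) <-> prods A k M.
Proof.
elim: k M => [|k IH] M /=; first by split; [move=> [<-|[]] | move=> ->; left].
rewrite List.in_flat_map; split.
  by move=> [M' [hM' /List.in_map_iff [i [<- _]]]]; exists i, M'; split => //; apply/IH.
move=> [i [M' [hM' ->]]]; exists M'; split; first exact/IH.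
by apply/List.in_map_iff; exists i; split => //; apply: In_mem; rewrite mem_enum.
Qed.

Lemma prods_ex : (0 < r)%N -> forall k, exists M, prods A k M.
Proof.
move=> hr; elim=> [|k [M hM]]; first by exists idm.
by exists (mulmm (A (Ordinal hr)) M), (Ordinal hr), M.
Qed.
End Products.

Definition strictly_increasing (phi : nat -> nat) := forall k, (phi k < phi k.+1)%N.

Lemma incr_ge phi : strictly_increasing phi -> forall k, (k <= phi k)%N.
Proof. by move=> h; elim=> [//|k IH]; apply: leq_ltn_trans IH (h k). Qed.

Lemma incr_comp phi psi : strictly_increasing phi -> strictly_increasing psi ->
  strictly_increasing (fun k => phi (psi k)).
Proof.
move=> h1 h2 k; apply: (leq_trans (h1 (psi k))); move: (h2 k).
elim: (psi k.+1) => [//|m IH]; rewrite ltnS leq_eqVlt => /orP [/eqP <- //|hlt].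
exact: leq_trans (IH hlt) (ltnW (h1 m)).
Qed.

Lemma cv_subseq (u : nat -> R) L phi :
  strictly_increasing phi -> Un_cv u L -> Un_cv (fun k => u (phi k)) L.
Proof.
move=> hphi hu eps he; have [M hM] := hu eps he; exists M => k hk; apply: hM.
by apply/leP; apply: leq_trans (incr_ge hphi k); apply/leP.
Qed.

Lemma bounded_cv_subseq (u : nat -> R) : (forall k, Rabs (u k) <= 1) ->
  exists phi L, strictly_increasing phi /\ Un_cv (fun k => u (phi k)) L.
Proof.
move=> hb.
have hI : forall k, -1 <= u k <= 1.
  by move=> k; have := hb k; have := Rle_abs (u k); have := Rle_abs (- u k); rewrite Rabs_Ropp; lra.
have [l hl] := Bolzano_Weierstrass u _ (compact_P3 (-1) 1) hI.
have hnext : forall m k : nat, exists p, (m <= p)%N /\ Rabs (u p - l) < / INR k.+1.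
  move=> m k; have hpos : 0 < / INR k.+1 by apply: Rinv_0_lt_compat; apply: lt_0_INR; lia.
  have [p [hp1 hp2]] := hl (disc l (mkposreal _ hpos)) m
    (ex_intro _ (mkposreal _ hpos) (fun y hy => hy)).
  by exists p; split; [apply/leP | exact: hp2].
pose next m k := epsilon (inhabits 0%N)
  (fun p => (m <= p)%N /\ Rabs (u p - l) < / INR k.+1).
have hn : forall m k, (m <= next m k)%N /\ Rabs (u (next m k) - l) < / INR k.+1.
  by move=> m k; apply: (epsilon_spec (inhabits 0%N) _ (hnext m k)).
pose fix phi k := if k is k'.+1 then next (phi k').+1 k else next 0%N 0%N.
exists phi, l; split; first by move=> k /=; apply: (hn _ _).1.
have hphi : forall k, Rabs (u (phi k) - l) < / INR k.+1 by case=> [|k] /=; apply: (hn _ _).2.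
move=> eps he; have [M hM] := archimed_cor1 eps he.
exists M => k hk; apply: Rlt_trans (hphi k) _; apply: Rle_lt_trans hM.1.
apply: Rinv_le_contravar; first by apply: lt_0_INR; lia.
by apply: le_INR; lia.
Qed.

Lemma bounded_cv_subseq_list (I : Type) (l : list I) (u : nat -> I -> R) :
  (forall k i, Rabs (u k i) <= 1) ->
  exists phi, strictly_increasing phi /\
    forall i, List.In i l -> exists L, Un_cv (fun k => u (phi k) i) L.
Proof.
move=> hb; elim: l => [|a l [phi1 [h1 h2]]]; first by exists id; split => // k /=.
have [phi2 [L [h3 h4]]] := bounded_cv_subseq (fun k => hb (phi1 k) a).
exists (fun k => phi1 (phi2 k)); split; first exact: incr_comp.
move=> i [<-|hi]; first by exists L.
by have [L' hL'] := h2 i hi; exists L'; apply: (cv_subseq h3 hL').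
Qed.

(* If P is a set of functions I -> R bounded by 1, closed under limits along
   the coordinates in l, and f is continuous along such limits and positive on
   P, then f is bounded below on P by a positive constant: otherwise points
   z_k of P with f(z_k) < 1/(k+1) would have a limit z in P with f(z) = 0. *)
Lemma compact_pos_lower_bound (I : Type) (l : list I)
    (P : (I -> R) -> Prop) (f : (I -> R) -> R) :
  (forall z, P z -> forall i, Rabs (z i) <= 1) ->
  (forall (zs : nat -> I -> R) z, (forall k, P (zs k)) ->
      (forall i, List.In i l -> Un_cv (fun k => zs k i) (z i)) ->
      P z /\ Un_cv (fun k => f (zs k)) (f z)) ->
  (forall z, P z -> 0 < f z) ->
  exists g, 0 < g /\ forall z, P z -> g <= f z.
Proof.
move=> hb hc hpos; apply: NNPP => hn.
have hk : forall k : nat, exists z, P z /\ f z < / INR k.+1.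
  move=> k; apply: NNPP => hk; apply: hn; exists (/ INR k.+1); split.
    by apply: Rinv_0_lt_compat; apply: lt_0_INR; lia.
  by move=> z hz; apply: Rnot_lt_le => hlt; apply: hk; exists z.
pose zs k := epsilon (inhabits (fun _ : I => 0)) (fun z => P z /\ f z < / INR k.+1).
have hzs : forall k, P (zs k) /\ f (zs k) < / INR k.+1.
  by move=> k; apply: (epsilon_spec (inhabits (fun _ : I => 0)) _ (hk k)).
have [phi [hphi hcv]] := bounded_cv_subseq_list l (fun k i => hb _ (hzs k).1 i).
pose z i := epsilon (inhabits 0) (fun L => Un_cv (fun k => zs (phi k) i) L).
have hz : forall i, List.In i l -> Un_cv (fun k => zs (phi k) i) (z i).
  by move=> i hi; apply: (epsilon_spec (inhabits 0) _ (hcv i hi)).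
have [hPz hfz] := hc (fun k => zs (phi k)) z (fun k => (hzs (phi k)).1) hz.
have hfz0 := hpos z hPz.
have [M hM] := hfz (f z / 2) ltac:(lra).
have [M2 hM2] := archimed_cor1 (f z / 2) ltac:(lra).
have := hM (maxn M M2) ltac:(apply/leP; exact: leq_maxl).
move=> /Rabs_def2 [h1 h2]; have h3 := (hzs (phi (maxn M M2))).2.
suff : / INR (phi (maxn M M2)).+1 <= / INR M2 by lra.
apply: Rinv_le_contravar; first by apply: lt_0_INR; lia.
apply: le_INR; apply/leP; apply: leq_trans (leq_maxr M M2) _.
exact: leq_trans (incr_ge hphi _) (leqnSn _).
Qed.

Definition l1 {d} (x : vec d) : R := \big[Rplus/0]_(i < d) Rabs (x i).
Definition unitv {d} (i : 'I_d) : vec d := fun j => if j == i then 1 else 0.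
Definition vsub {d} (x y : vec d) : vec d := vadd x (vopp y).

Section L1.
Variable d : nat.
Implicit Types x y : vec d.

Lemma l1_ge_coord x i : Rabs (x i) <= l1 x.
Proof.
rewrite /l1 (bigD1 i) //=; set S := \big[_/_]_(_ | _) _.
suff : 0 <= S by lra.
by apply: sumR_ge0 => j _; apply: Rabs_pos.
Qed.

Lemma l1_ge0 x : 0 <= l1 x.
Proof. by apply: sumR_ge0 => i _; apply: Rabs_pos. Qed.

Lemma l1_scale c x : l1 (vscale c x) = Rabs c * l1 x.
Proof. by rewrite /l1 big_distrr /=; apply: eq_bigr => i _; rewrite /vscale Rabs_mult. Qed.

Lemma l1_zero : l1 (@vzero d) = 0.
Proof. by rewrite /l1 big1 // => i _; rewrite /vzero Rabs_R0. Qed.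

Lemma l1_pos x : x <> vzero -> 0 < l1 x.
Proof.
move=> hx; have [i hi] : exists i, x i <> 0.
  by apply: NNPP => h; apply: hx; apply: vext => i; apply: NNPP => hi; apply: h; exists i.
by have := l1_ge_coord x i; have := Rabs_pos_lt _ hi; lra.
Qed.

Lemma l1_cont (xs : nat -> vec d) x :
  (forall i, Un_cv (fun k => xs k i) (x i)) -> Un_cv (fun k => l1 (xs k)) (l1 x).
Proof. by move=> h; apply: cv_sumR => i _; apply: cv_cvabs. Qed.

Lemma l1_normalize x : x <> vzero -> l1 (vscale (/ l1 x) x) = 1.
Proof.
move=> hx; have hp := l1_pos hx.
by rewrite l1_scale Rabs_right; [field; lra | apply: Rle_ge; apply: Rlt_le; apply: Rinv_0_lt_compat].
Qed.
End L1.

Section Norm.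
Variable d : nat.
Variable N : vec d -> R.
Hypothesis hN : is_norm N.
Implicit Types x y : vec d.

Lemma N_ge0 x : 0 <= N x. Proof. exact: norm_nonneg hN x. Qed.

Lemma N_zero : N vzero = 0.
Proof.
have -> : (vzero : vec d) = vscale 0 vzero by apply: vext => i; rewrite /vscale /vzero; ring.
by rewrite (norm_hom hN) Rabs_R0; ring.
Qed.

Lemma N_opp x : N (vopp x) = N x.
Proof. by rewrite vopp_scale (norm_hom hN) Rabs_Ropp Rabs_R1; ring. Qed.

Lemma N_pos x : x <> vzero -> 0 < N x.
Proof.
move=> hx; case/Rle_lt_or_eq_dec: (N_ge0 x) => // h.
by exfalso; apply: hx; apply: (norm_def hN); rewrite h.
Qed.

Lemma N_scale_pos c x : 0 <= c -> N (vscale c x) = c * N x.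
Proof. by move=> hc; rewrite (norm_hom hN) Rabs_right //; apply: Rle_ge. Qed.

Lemma N_normalize x : x <> vzero -> N (vscale (/ N x) x) = 1.
Proof.
move=> hx; have hp := N_pos hx.
by rewrite N_scale_pos; [field; lra | apply: Rlt_le; apply: Rinv_0_lt_compat].
Qed.

Lemma N_unit_ex : (0 < d)%N -> exists x, N x = 1.
Proof.
move=> hd; have he : unitv (Ordinal hd) <> vzero.
  by move=> h; have := congr1 (fun v => v (Ordinal hd)) h; rewrite /unitv /vzero eqxx; lra.
by exists (vscale (/ N (unitv (Ordinal hd))) (unitv (Ordinal hd))); apply: N_normalize.
Qed.

Lemma N_sub x y : N x - N y <= N (vsub x y).
Proof.
have e : x = vadd (vsub x y) y by apply: vext => i; rewrite /vsub /vadd /vopp; ring.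
by have := norm_triangle hN (vsub x y) y; rewrite -e; lra.
Qed.

Lemma N_comb (l : list (R * vec d)) :
  N (comb l) <= \big[Rplus/0]_(ws <- l) (Rabs ws.1 * N ws.2).
Proof.
elim: l => [|[w s] l IH] /=; first by rewrite big_nil N_zero; lra.
rewrite big_cons /=; apply: Rle_trans (norm_triangle hN _ _) _.
by rewrite (norm_hom hN); lra.
Qed.

Definition N_l1_const := \big[Rplus/0]_(i < d) N (unitv i).

Lemma N_l1_const_ge0 : 0 <= N_l1_const.
Proof. by apply: sumR_ge0 => i _; apply: N_ge0. Qed.

Lemma N_le_l1 x : N x <= N_l1_const * l1 x.
Proof.
have decomp : x = comb [seq (x i, unitv i) | i <- enum 'I_d].
  apply: vext => k; rewrite comb_coord big_map big_enum (bigD1 k) //= big1.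
    by rewrite /unitv eqxx; ring.
  by move=> i /negPf hi; rewrite /unitv eq_sym hi; ring.
rewrite {1}decomp; apply: Rle_trans (N_comb _) _.
rewrite big_map big_enum /= [N_l1_const * _]Rmult_comm /N_l1_const big_distrr /=.
by apply: sumR_le => i _ /=; apply: Rmult_le_compat_r; [apply: N_ge0 | apply: l1_ge_coord].
Qed.

Lemma N_cont (xs : nat -> vec d) x :
  (forall i, Un_cv (fun k => xs k i) (x i)) -> Un_cv (fun k => N (xs k)) (N x).
Proof.
move=> h; set C := N_l1_const; have hC : 0 <= C := N_l1_const_ge0.
have hs : Un_cv (fun k => l1 (vsub (xs k) x)) 0.
  rewrite -(@l1_zero d); apply: l1_cont => i; rewrite /vzero.
  have := CV_minus _ _ _ _ (h i) (cv_const (x i)); rewrite Rminus_diag.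
  by apply: Un_cv_ext => k; rewrite /vsub /vadd /vopp.
move=> e he; have [M hM] := hs (e / (C + 1)) ltac:(apply: Rdiv_lt_0_compat; lra).
exists M => k hk; have := hM k hk; rewrite /Rdist Rminus_0_r Rabs_right; last first.
  by apply: Rle_ge; apply: l1_ge0.
move=> hl1; have hsub1 := N_sub (xs k) x; have hsub2 := N_sub x (xs k).
have hsym : N (vsub x (xs k)) = N (vsub (xs k) x).
  by rewrite -N_opp; congr N; apply: vext => i; rewrite /vsub /vopp /vadd; ring.
have hdiff := N_le_l1 (vsub (xs k) x); rewrite -/C in hdiff.
have hCl1 : C * l1 (vsub (xs k) x) <= C * (e / (C + 1)) by apply: Rmult_le_compat_l; lra.
have hCe : C * (e / (C + 1)) < e.
  by apply: (Rmult_lt_reg_r (C + 1)); [lra | field_simplify; lra].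
by apply: Rabs_def1; lra.
Qed.

(* The lower bound follows from compactness of the l1 unit sphere. *)
Lemma N_ge_l1 : exists c, 0 < c /\ forall x, c * l1 x <= N x.
Proof.
have hc : forall (zs : nat -> vec d) z, (forall k, l1 (zs k) = 1) ->
    (forall i, List.In i (enum 'I_d) -> Un_cv (fun k => zs k i) (z i)) ->
    l1 z = 1 /\ Un_cv (fun k => N (zs k)) (N z).
  move=> zs z hzs hcv.
  have hcv' : forall i, Un_cv (fun k => zs k i) (z i).
    by move=> i; apply: hcv; apply: In_mem; rewrite mem_enum.
  split; last exact: N_cont.
  apply: (UL_sequence _ _ _ (l1_cont hcv')).
  by apply: (Un_cv_ext (fun _ => 1)) => //; apply: cv_const.
have hp : forall z : vec d, l1 z = 1 -> 0 < N z.
  by move=> z hz; apply: N_pos => h; move: hz; rewrite h l1_zero; lra.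
have hb : forall z : vec d, l1 z = 1 -> forall i, Rabs (z i) <= 1.
  by move=> z hz i; rewrite -hz; apply: l1_ge_coord.
have [g [hg hge]] := compact_pos_lower_bound hb hc hp.
exists g; split => // x; case: (classic (x = vzero)) => [->|hx].
  by rewrite l1_zero N_zero; lra.
have hp' := l1_pos hx.
have := hge _ (l1_normalize hx); rewrite (norm_hom hN) Rabs_right; last first.
  by apply: Rle_ge; apply: Rlt_le; apply: Rinv_0_lt_compat.
move=> h; have := Rmult_le_compat_l (l1 x) _ _ (Rlt_le _ _ hp') h.
have -> : l1 x * (/ l1 x * N x) = N x by field; lra.
lra.
Qed.
End Norm.

(* The induced operator norm.  A crude bound through the l1 norm shows that
   it is finite, after which it has the usual properties. *)

Definition l1_matrix_bound {d} (M : mat d) :=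
  \big[Rplus/0]_(i < d) \big[Rplus/0]_(j < d) Rabs (M i j).

Lemma l1_mulmv d (M : mat d) x : l1 (mulmv M x) <= l1_matrix_bound M * l1 x.
Proof.
rewrite /l1 /l1_matrix_bound big_distrl /=; apply: sumR_le => i _.
apply: Rle_trans (sumR_abs _ _ _) _; rewrite big_distrl /=; apply: sumR_le => j _.
by rewrite Rabs_mult; apply: Rmult_le_compat_l; [apply: Rabs_pos | apply: l1_ge_coord].
Qed.

Section OperatorNorm.
Variable d : nat.
Variable N : vec d -> R.
Hypothesis hN : is_norm N.
Hypothesis hd : (0 < d)%N.
Implicit Types (M P : mat d) (x : vec d).

Lemma mulmv_bounded M : exists K, forall x, N (mulmv M x) <= K * N x.
Proof.
have [c [hc hcN]] := N_ge_l1 hN.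
have hK : 0 <= l1_matrix_bound M.
  by apply: sumR_ge0 => i _; apply: sumR_ge0 => j _; apply: Rabs_pos.
have hC := N_l1_const_ge0 hN.
exists (N_l1_const N * l1_matrix_bound M / c) => x.
apply: Rle_trans (N_le_l1 hN _) _.
apply: Rle_trans (Rmult_le_compat_l _ _ _ hC (l1_mulmv M x)) _.
have h1 := hcN x; have h2 := l1_ge0 x.
have h3 : l1 x <= N x / c by apply: (Rmult_le_reg_l c) => //; field_simplify; lra.
have := Rmult_le_compat_l _ _ _ (Rmult_le_pos _ _ hC hK) h3.
have -> : N_l1_const N * l1_matrix_bound M * (N x / c)
        = N_l1_const N * l1_matrix_bound M / c * N x by field; lra.
by rewrite Rmult_assoc.
Qed.

Lemma opnorm_is_lub M :
  is_lub (fun t => exists x, N x = 1 /\ t = N (mulmv M x)) (opnorm N M).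
Proof.
apply: sup_is_lub; first by have [x hx] := N_unit_ex hN hd; exists (N (mulmv M x)), x.
have [K hK] := mulmv_bounded M.
by exists K => t [x [hx ->]]; have := hK x; rewrite hx; lra.
Qed.

Lemma opnorm_ge_unit M x : N x = 1 -> N (mulmv M x) <= opnorm N M.
Proof. by move=> hx; have [h _] := opnorm_is_lub M; apply: h; exists x. Qed.

Lemma opnorm_ge0 M : 0 <= opnorm N M.
Proof.
have [x hx] := N_unit_ex hN hd.
exact: Rle_trans (N_ge0 hN _) (opnorm_ge_unit M hx).
Qed.

Lemma opnorm_ge M x : N (mulmv M x) <= opnorm N M * N x.
Proof.
case: (classic (x = vzero)) => [->|hx].
  by rewrite mulmv_zero (N_zero hN); have := opnorm_ge0 M; nra.
have hp := N_pos hN hx.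
have hinv : 0 <= / N x by apply: Rlt_le; apply: Rinv_0_lt_compat.
have := opnorm_ge_unit M (N_normalize hN hx).
rewrite mulmv_scale (N_scale_pos hN _ hinv) => h.
have := Rmult_le_compat_l _ _ _ (Rlt_le _ _ hp) h.
have -> : N x * (/ N x * N (mulmv M x)) = N (mulmv M x) by field; lra.
lra.
Qed.

Lemma opnorm_le M c : (forall x, N x = 1 -> N (mulmv M x) <= c) -> opnorm N M <= c.
Proof. by move=> h; have [_ h2] := opnorm_is_lub M; apply: h2 => t [x [hx ->]]; apply: h. Qed.

Lemma opnorm_approx M s : s < opnorm N M -> exists x, N x = 1 /\ s < N (mulmv M x).
Proof.
move=> hs; apply: NNPP => hn; suff : opnorm N M <= s by lra.
by apply: opnorm_le => x hx; apply: Rnot_lt_le => hlt; apply: hn; exists x.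
Qed.

Lemma opnorm_mul M P : opnorm N (mulmm M P) <= opnorm N M * opnorm N P.
Proof.
apply: opnorm_le => x hx; rewrite mulmvA; apply: Rle_trans (opnorm_ge M _) _.
by apply: Rmult_le_compat_l; [apply: opnorm_ge0 | have := opnorm_ge P x; rewrite hx; lra].
Qed.

Lemma opnorm_id : opnorm N idm = 1.
Proof.
apply: Rle_antisym; first by apply: opnorm_le => x hx; rewrite mulmv_id; lra.
by have [x hx] := N_unit_ex hN hd; have := opnorm_ge_unit idm hx; rewrite mulmv_id; lra.
Qed.
End OperatorNorm.

Section ProductNorms.
Variables d r : nat.
Variable A : 'I_r -> mat d.
Variable N : vec d -> R.
Hypothesis hN : is_norm N.
Hypothesis hd : (0 < d)%N.
Hypothesis hr : (0 < r)%N.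

Local Notation normA k := (setnorm_pow N A k).

Lemma normA_is_lub k :
  is_lub (fun t => exists M, prods A k M /\ t = opnorm N M) (normA k).
Proof.
apply: sup_is_lub; first by have [M hM] := prods_ex A hr k; exists (opnorm N M), M.
exists (\big[Rplus/0]_(M <- prods_list A k) opnorm N M) => t [M [hM ->]].
by apply: sumR_ge_term; [exact: opnorm_ge0 hN hd | apply/prods_listP].
Qed.

Lemma normA_ge k M : prods A k M -> opnorm N M <= normA k.
Proof. by move=> hM; have [h _] := normA_is_lub k; apply: h; exists M. Qed.

Lemma normA_le k c : (forall M, prods A k M -> opnorm N M <= c) -> normA k <= c.
Proof. by move=> h; have [_ h2] := normA_is_lub k; apply: h2 => t [M [hM ->]]; apply: h. Qed.

Lemma normA_approx k s : s < normA k -> exists M, prods A k M /\ s < opnorm N M.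
Proof.
move=> hs; apply: NNPP => hn; suff : normA k <= s by lra.
by apply: normA_le => M hM; apply: Rnot_lt_le => hlt; apply: hn; exists M.
Qed.

Lemma normA_ge0 k : 0 <= normA k.
Proof. by have [M hM] := prods_ex A hr k; apply: Rle_trans (normA_ge hM); apply: opnorm_ge0 hN hd _. Qed.

Lemma normA0 : normA 0 = 1.
Proof.
apply: Rle_antisym; first by apply: normA_le => M /= ->; rewrite (opnorm_id hN hd); lra.
by have := @normA_ge 0 idm erefl; rewrite (opnorm_id hN hd); lra.
Qed.

Lemma normA_add k l : normA (k + l) <= normA k * normA l.
Proof.
apply: normA_le => Q hQ; have [X [Y [hX [hY ->]]]] := prods_split hQ.
apply: Rle_trans (opnorm_mul hN hd X Y) _.
by apply: Rmult_le_compat; [apply: opnorm_ge0 hN hd _ | apply: opnorm_ge0 hN hd _ | apply: normA_ge | apply: normA_ge].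
Qed.

Lemma normA_mul k q : normA (q * k) <= normA k ^ q.
Proof.
elim: q => [|q IH]; first by rewrite mul0n normA0 /=; lra.
rewrite mulSn /=; apply: Rle_trans (normA_add k (q * k)) _.
by apply: Rmult_le_compat_l => //; apply: normA_ge0.
Qed.

Lemma normA_pow k : normA k <= normA 1 ^ k.
Proof. by have := normA_mul 1 k; rewrite muln1. Qed.

Lemma normA_div k n : normA k <= normA n ^ (k %/ n) * normA 1 ^ (k %% n).
Proof.
rewrite {1}(divn_eq k n); apply: Rle_trans (normA_add _ _) _.
by apply: Rmult_le_compat; [apply: normA_ge0 | apply: normA_ge0 | apply: normA_mul | apply: normA_pow].
Qed.

Lemma normA1_pos k : (0 < k)%N -> 0 < normA k -> 0 < normA 1.
Proof.
move=> hk hpos; case: (normA_ge0 1) => // h1.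
by have := normA_pow k; rewrite -h1 pow_i; [lra | apply/ltP].
Qed.

Lemma setnormE : setnorm N A = normA 1.
Proof.
apply: sup_ext => t; split.
  by move=> [i ->]; exists (A i); split => //; exists i, idm; rewrite mulmm_id_r.
by move=> [M [[i [M' [-> ->]]] ->]]; exists i; rewrite mulmm_id_r.
Qed.
End ProductNorms.

Lemma INR_pos n : (0 < n)%N -> 0 < INR n.
Proof. by move=> h; apply: lt_0_INR; apply/ltP. Qed.

Lemma exp_le x y : x <= y -> exp x <= exp y.
Proof. by case=> h; [apply: Rlt_le; apply: exp_increasing | rewrite h; lra]. Qed.

Lemma ln_le x y : 0 < x -> x <= y -> ln x <= ln y.
Proof. by move=> hx; case=> h; [apply: Rlt_le; apply: ln_increasing | rewrite h; lra]. Qed.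

Lemma Rpower_le_small_base c x y : 0 < c <= 1 -> x <= y -> Rpower c y <= Rpower c x.
Proof.
move=> [h1 h2] hxy; rewrite /Rpower; apply: exp_le.
have : ln c <= 0 by rewrite -ln_1; apply: ln_le.
nra.
Qed.

Lemma Rroot_pos n t : 0 < t -> Rroot n t = Rpower t (/ INR n).
Proof. by rewrite /Rroot => h; case: Rle_dec => // h'; lra. Qed.

Lemma Rroot_nonpos n t : t <= 0 -> Rroot n t = 0.
Proof. by rewrite /Rroot => h; case: Rle_dec => // h'; lra. Qed.

Lemma Rroot_ge0 n t : 0 <= Rroot n t.
Proof. by rewrite /Rroot; case: Rle_dec => h /=; [lra | apply: Rlt_le; exact: exp_pos]. Qed.

Lemma Rpower_root_pow c n : 0 < c -> (0 < n)%N -> Rpower c (/ INR n) ^ n = c.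
Proof.
move=> hc hn; rewrite -Rpower_pow; last exact: exp_pos.
by rewrite Rpower_mult Rinv_l ?Rpower_1 //; have := INR_pos hn; lra.
Qed.

Lemma pow_ge_of_root_le c rho n : 0 < c -> (0 < n)%N ->
  Rpower c (/ INR n) <= rho -> c <= rho ^ n.
Proof.
move=> hc hn h; rewrite -(Rpower_root_pow hc hn).
by apply: pow_incr; split => //; apply: Rlt_le; apply: exp_pos.
Qed.

Lemma Rroot_le_mul a e rho n : (0 < n)%N -> 0 < a -> 0 < e -> 0 < rho ->
  a <= e * rho ^ n -> Rroot n a <= Rroot n e * rho.
Proof.
move=> hn ha he hrho h; rewrite !Rroot_pos //.
have hinv : 0 <= / INR n by apply: Rlt_le; apply: Rinv_0_lt_compat; apply: INR_pos.
apply: Rle_trans (Rle_Rpower_l _ _ _ hinv (conj ha h)) _.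
rewrite -Rpower_mult_distr //; last exact: pow_lt.
rewrite -Rpower_pow // Rpower_mult Rinv_r ?Rpower_1 //; have := INR_pos hn; lra.
Qed.

Lemma mul_le_of_forall_lt c s R : 0 < c -> 0 <= s ->
  (forall t, 0 < t < c -> t * s <= R) -> c * s <= R.
Proof.
move=> hc hs h; apply: Rnot_lt_le => hlt.
case: (Req_dec s 0) => hs0; first by have := h (c / 2) ltac:(lra); rewrite hs0 in hlt *; lra.
pose e := Rmin (c / 2) ((c * s - R) / (2 * s)).
have he1 : e <= c / 2 := Rmin_l _ _.
have he2 : e * s <= (c * s - R) / 2.
  have := Rmult_le_compat_r s _ _ hs (Rmin_r (c / 2) ((c * s - R) / (2 * s))).
  by have -> : (c * s - R) / (2 * s) * s = (c * s - R) / 2 by field.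
have he0 : 0 < e by apply: Rmin_glb_lt; [lra | apply: Rdiv_lt_0_compat; lra].
by have := h (c - e) ltac:(lra); nra.
Qed.

Section JointSpectralRadius.
Variables d r : nat.
Variable A : 'I_r -> mat d.
Variable N : vec d -> R.
Hypothesis hN : is_norm N.
Hypothesis hd : (0 < d)%N.
Hypothesis hr : (0 < r)%N.

Local Notation normA k := (setnorm_pow N A k).
Local Notation rootA k := (Rroot k (normA k)).

(* The roots are bounded, so the limsup defining rho is a genuine limsup. *)
Lemma rootA_bound k : rootA k <= Rmax 1 (normA 1).
Proof.
case: (Rle_dec (normA k) 0) => hb; first by rewrite Rroot_nonpos //; have := Rmax_l 1 (normA 1); lra.
have hbk : 0 < normA k by lra.
rewrite Rroot_pos //; case: k hb hbk => [|k] hb hbk.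
  by rewrite (normA0 A hN hd hr) /Rpower ln_1 Rmult_0_r exp_0; apply: Rmax_l.
have hb1 := normA1_pos hN hd hr (ltn0Sn k) hbk.
have hinv : 0 <= / INR k.+1 by apply: Rlt_le; apply: Rinv_0_lt_compat; apply: INR_pos.
apply: Rle_trans (Rmax_r 1 _).
apply: Rle_trans (Rle_Rpower_l _ _ _ hinv (conj hbk (normA_pow A hN hd hr k.+1))) _.
by rewrite -Rpower_pow // Rpower_mult Rinv_r ?Rpower_1 //; have := INR_pos (ltn0Sn k); lra.
Qed.

Definition tail_sup m := sup (fun s => exists k, (m <= k)%N /\ s = rootA k).

Lemma tail_sup_is_lub m : is_lub (fun s => exists k, (m <= k)%N /\ s = rootA k) (tail_sup m).
Proof.
apply: sup_is_lub; first by exists (rootA m), m.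
by exists (Rmax 1 (normA 1)) => s [k [_ ->]]; apply: rootA_bound.
Qed.

Lemma jsr_le c : (exists m, forall k, (m <= k)%N -> rootA k <= c) -> jsr N A <= c.
Proof.
move=> [m hm]; apply: Rle_trans (inf_lower _ (ex_intro _ m erefl)) _.
  exists 0 => t [m' ->]; have [h _] := tail_sup_is_lub m'.
  by apply: Rle_trans (h (rootA m') _); [apply: Rroot_ge0 | exists m'].
by have [_ h] := tail_sup_is_lub m; apply: h => s [k [hk ->]]; apply: hm.
Qed.

Lemma jsr_ge c : (forall m, exists k, (m <= k)%N /\ c <= rootA k) -> c <= jsr N A.
Proof.
move=> h; apply: inf_greatest; first by exists (tail_sup 0), 0%N.
move=> t [m ->]; have [k [hk hc]] := h m; apply: Rle_trans hc _.
by have [h1 _] := tail_sup_is_lub m; apply: h1; exists k.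
Qed.

Lemma jsr_ge0 : 0 <= jsr N A.
Proof. by apply: jsr_ge => m; exists m; split => //; apply: Rroot_ge0. Qed.

(* Fekete-type estimate: with k = q n + s, s < n, and lam = ln ||A^n|| / n,
   ln ||A^k|| <= k lam + n |ln ||A|| - lam|. *)
Lemma ln_normA_le n k : (0 < n)%N -> 0 < normA n -> 0 < normA k ->
  ln (normA k) <= INR k * (ln (normA n) / INR n)
                  + INR n * Rabs (ln (normA 1) - ln (normA n) / INR n).
Proof.
move=> hn hbn hbk; set lam := ln (normA n) / INR n.
have hnR := INR_pos hn; have hb1 := normA1_pos hN hd hr hn hbn.
set q := (k %/ n)%N; set s := (k %% n)%N.
have hks : INR k = INR q * INR n + INR s by rewrite /q /s {1}(divn_eq k n) plus_INR mult_INR.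
have hsn : INR s <= INR n by apply: le_INR; apply/leP; apply: ltnW; rewrite /s ltn_mod.
have hs0 := pos_INR s.
have hln : ln (normA k) <= INR q * ln (normA n) + INR s * ln (normA 1).
  apply: Rle_trans (ln_le hbk (normA_div A hN hd hr k n)) _.
  have hp1 : 0 < normA n ^ q by apply: pow_lt.
  have hp2 : 0 < normA 1 ^ s by apply: pow_lt.
  by rewrite -/q -/s ln_mult // !ln_pow //; lra.
have hlam : ln (normA n) = INR n * lam by rewrite /lam; field; lra.
have hC : INR s * (ln (normA 1) - lam) <= INR n * Rabs (ln (normA 1) - lam).
  apply: Rle_trans (Rmult_le_compat_l _ _ _ hs0 (Rle_abs _)) _.
  by apply: Rmult_le_compat_r => //; apply: Rabs_pos.
rewrite hlam in hln; rewrite hks; nra.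
Qed.

(* Hence, for any slack factor 1/t > 1, the roots eventually fall below
   rootA n / t, since ln ||A^k|| / k <= lam + n C / k and n C / k -> 0. *)
Lemma rootA_eventually_le n t : (0 < n)%N -> 0 < normA n -> 0 < t < 1 ->
  exists m, forall k, (m <= k)%N -> rootA k <= rootA n / t.
Proof.
move=> hn hbn [ht0 ht1]; set lam := ln (normA n) / INR n.
set C := Rabs (ln (normA 1) - lam); set eps := - ln t.
have heps : 0 < eps by have := ln_increasing t 1 ht0 ht1; rewrite ln_1 /eps; lra.
have hnR := INR_pos hn; have hC : 0 <= C := Rabs_pos _.
have [M [hM hM0]] := archimed_cor1 (eps / (INR n * C + 1))
  ltac:(apply: Rdiv_lt_0_compat => //; nra).
exists (maxn M n) => k hk.
have hMk : INR M <= INR k by apply: le_INR; apply/leP; apply: leq_trans (leq_maxl M n) hk.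
have hk0 : (0 < k)%N := leq_trans hn (leq_trans (leq_maxr M n) hk).
have hkR := INR_pos hk0; have hMR : 0 < INR M by apply: lt_0_INR.
case: (Rle_dec (normA k) 0) => hbk.
  rewrite Rroot_nonpos //; apply: Rmult_le_pos; first exact: Rroot_ge0.
  by apply: Rlt_le; apply: Rinv_0_lt_compat.
have hln := ln_normA_le hn hbn (Rnot_le_lt _ _ hbk); rewrite -/lam -/C in hln.
have hsmall : INR n * C / INR k < eps.
  apply: Rle_lt_trans (_ : _ <= (INR n * C + 1) * / INR M) _.
    by apply: Rmult_le_compat; [nra | apply: Rlt_le; apply: Rinv_0_lt_compat | lra | apply: Rinv_le_contravar].
  have := Rmult_lt_compat_l (INR n * C + 1) _ _ ltac:(nra) hM.
  by have -> : (INR n * C + 1) * (eps / (INR n * C + 1)) = eps by field; nra.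
rewrite !Rroot_pos //; last lra.
rewrite /Rdiv /Rpower; have -> : / t = exp eps by rewrite /eps exp_Ropp exp_ln.
rewrite -exp_plus; apply: exp_le.
have -> : / INR n * ln (normA n) = lam by rewrite /lam /Rdiv Rmult_comm.
apply: (Rmult_le_reg_l (INR k)) => //.
rewrite -Rmult_assoc Rinv_r ?Rmult_1_l; last lra.
have : INR k * (INR n * C / INR k) = INR n * C by field; lra.
nra.
Qed.

Lemma jsr_le_rootA n : (0 < n)%N -> jsr N A <= rootA n.
Proof.
move=> hn; case: (Rle_dec (normA n) 0) => hbn.
  rewrite Rroot_nonpos //; apply: jsr_le; exists n => k hk; rewrite Rroot_nonpos; first lra.
  rewrite -(subnKC hk); apply: Rle_trans (normA_add A hN hd hr _ _) _.
  by have := normA_ge0 A hN hd hr (k - n); nra.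
rewrite -[jsr N A]Rmult_1_l; apply: mul_le_of_forall_lt; [lra | exact: jsr_ge0 |].
move=> t ht; have h := jsr_le (rootA_eventually_le hn (Rnot_le_lt _ _ hbn) ht).
have := Rmult_le_compat_l t _ _ (Rlt_le _ _ ht.1) h.
have -> : t * (rootA n / t) = rootA n by field; lra.
lra.
Qed.

Lemma chain_roots c n q : 0 < c -> (0 < n)%N ->
  (forall j, exists L, (j * n <= L)%N /\ (L <= j * (n + q))%N /\ c ^ j <= normA L) ->
  forall m, exists L j, (m <= L)%N /\ (0 < L)%N /\ (j * n <= L)%N /\
    (L <= j * (n + q))%N /\ Rpower c (INR j / INR L) <= rootA L.
Proof.
move=> hc hn hch m; have [L [hlo [hhi hcL]]] := hch m.+1.
have hmL : (m.+1 <= L)%N by apply: leq_trans hlo; rewrite leq_pmulr.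
exists L, m.+1; split; first exact: ltnW.
split; first exact: leq_ltn_trans (leq0n m) hmL.
split => //; split => //.
have hcj : 0 < c ^ m.+1 by apply: pow_lt.
rewrite Rroot_pos; last lra.
have hinv : 0 <= / INR L by apply: Rlt_le; apply: Rinv_0_lt_compat; apply: INR_pos; apply: leq_ltn_trans (leq0n m) hmL.
apply: Rle_trans (Rle_Rpower_l _ _ _ hinv (conj hcj hcL)).
by rewrite -Rpower_pow // Rpower_mult /Rdiv; lra.
Qed.

Lemma jsr_chain_lower_bound c n q : 0 < c -> (0 < n)%N ->
  (forall j, exists L, (j * n <= L)%N /\ (L <= j * (n + q))%N /\ c ^ j <= normA L) ->
  c <= Rmax (jsr N A ^ n) (jsr N A ^ (n + q)).
Proof.
move=> hc hn hch; have roots := chain_roots hc hn hch.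
have hnq : (0 < n + q)%N by rewrite addn_gt0 hn.
case: (Rle_lt_dec 1 c) => hc1.
  apply: Rle_trans (Rmax_r _ _); apply: pow_ge_of_root_le => //.
  apply: jsr_ge => m; have [L [j [hm [hL0 [hlo [hhi hroot]]]]]] := roots m.
  exists L; split => //; apply: Rle_trans hroot; apply: Rle_Rpower => //.
  have hL := INR_pos hL0; have hnqR := INR_pos hnq.
  have : INR L <= INR j * INR (n + q) by rewrite -mult_INR; apply: le_INR; apply/leP.
  move=> hhiR; apply: (Rmult_le_reg_l (INR (n + q) * INR L)); first nra.
  by rewrite /Rdiv; field_simplify; lra.
apply: Rle_trans (Rmax_l _ _); apply: pow_ge_of_root_le => //.
apply: jsr_ge => m; have [L [j [hm [hL0 [hlo [hhi hroot]]]]]] := roots m.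
exists L; split => //; apply: Rle_trans hroot; apply: Rpower_le_small_base; first lra.
have hL := INR_pos hL0; have hnR := INR_pos hn.
have : INR j * INR n <= INR L by rewrite -mult_INR; apply: le_INR; apply/leP.
move=> hloR; apply: (Rmult_le_reg_l (INR n * INR L)); first nra.
by rewrite /Rdiv; field_simplify; lra.
Qed.
End JointSpectralRadius.

Section Span.
Variable d : nat.
Implicit Types (S T : vec d -> Prop) (x y : vec d).

Definition span S y :=
  exists l : list (R * vec d), List.Forall (fun ws => S ws.2) l /\ y = comb l.

Lemma span_sub S y : S y -> span S y.
Proof.
move=> h; exists ((1, y) :: nil); split; first by constructor.
by apply: vext => k; rewrite /= /vadd /vscale /vzero; ring.
Qed.

Lemma span_subspace S : is_subspace (span S).
Proof.
split; first by exists nil.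
split.
  move=> _ _ [l1 [h1 ->]] [l2 [h2 ->]]; exists (l1 ++ l2).
  by rewrite comb_cat; split => //; apply List.Forall_app.
move=> c _ [l [h ->]]; exists (List.map (fun ws => (c * ws.1, ws.2)) l).
by rewrite comb_scale; split => //; apply List.Forall_map; apply: List.Forall_impl h.
Qed.

Lemma span_mono S T y : (forall z, S z -> T z) -> span S y -> span T y.
Proof. by move=> h [l [hl ->]]; exists l; split => //; apply: List.Forall_impl hl => ws; apply: h. Qed.

Lemma span_mulmv S T M y : (forall z, S z -> T (mulmv M z)) -> span S y -> span T (mulmv M y).
Proof.
move=> h [l [hl ->]]; rewrite mulmv_comb; eexists; split; last by reflexivity.
by apply List.Forall_map; apply: List.Forall_impl hl => ws /=; apply: h.
Qed.
End Span.

Lemma subspace_big d (V : vec d -> Prop) (I : Type) (r : seq I) (P : pred I) (F : I -> vec d) :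
  is_subspace V -> (forall i, P i -> V (F i)) -> V (\big[vadd/vzero]_(i <- r | P i) F i).
Proof. by move=> [h0 [ha _]] h; apply: big_ind. Qed.

(* A chain of subspaces of R^d has at most d strict inclusions: otherwise
   picking a new vector at each of d+1 steps yields d+1 independent vectors. *)
Lemma subspace_chain_bound d (Z : nat -> vec d -> Prop) :
  (forall i, is_subspace (Z i)) -> (forall i y, Z i y -> Z i.+1 y) ->
  ~ (forall i, (i <= d)%N -> exists y, Z i.+1 y /\ ~ Z i y).
Proof.
move=> hsub hmono hstrict.
have hle : forall i j y, (i <= j)%N -> Z i y -> Z j y.
  move=> i j y /subnKC <-; elim: (j - i)%N => [|k IH] hy; first by rewrite addn0.
  by rewrite addnS; apply: hmono; apply: IH.
pose y (i : 'I_d.+1) := epsilon (inhabits vzero) (fun y => Z i.+1 y /\ ~ Z i y).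
have hy : forall i : 'I_d.+1, Z i.+1 (y i) /\ ~ Z i (y i).
  by move=> i; apply: (epsilon_spec (inhabits vzero) (fun y => Z i.+1 y /\ ~ Z i y)); apply: hstrict; rewrite -ltnS.
have [c [[i1 hi1] hc]] := linear_dependence y.
have /= [i0 /eqP hci0 hmax] := @arg_maxnP _ i1 (fun i => c i != 0) val (introN eqP hi1).
pose rest := \big[vadd/vzero]_(i < d.+1 | i != i0) vscale (c i) (y i).
have hrest : Z i0 rest.
  apply: subspace_big => // i hi; have [h0 [_ hscale]] := hsub i0.
  case: (Req_dec (c i) 0) => hci.
    by have -> : vscale (c i) (y i) = vzero by apply: vext => k; rewrite /vscale hci /vzero; ring.
  have hlt : (i < i0)%N.
    rewrite ltn_neqAle; apply/andP; split; last by apply: hmax; apply/eqP.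
    by move: hi; apply: contra => /eqP /val_inj ->.
  by apply: hscale; apply: hle (hy i).1.
apply: (hy i0).2.
have -> : y i0 = vscale (- / c i0) rest.
  apply: vext => k; move: (hc k); rewrite (bigD1 i0) //= => hk.
  have hrk : rest k + c i0 * y i0 k = 0 by rewrite /rest big_vadd_coord -[RHS]hk Rplus_comm.
  by rewrite /vscale (_ : rest k = - (c i0 * y i0 k)); [field | lra].
by have [_ [_ hscale]] := hsub i0; apply: hscale.
Qed.

(* Krylov spaces V_k(x) = span A_k(x).  For an irreducible family they grow
   strictly until they exhaust R^d, which must happen by step d - 1. *)

Section Krylov.
Variables d r : nat.
Variable A : 'I_r -> mat d.
Hypothesis hirr : irreducible A.

Definition krylov (x : vec d) k := span (Ap A k x).

Lemma Ap_mono k k' x y : (k <= k')%N -> Ap A k x y -> Ap A k' x y.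
Proof. by move=> hk [j [M [hj [hM ->]]]]; exists j, M; split => //; apply: leq_trans hk. Qed.

Lemma Ap_self k x : Ap A k x x.
Proof. by exists 0%N, idm; rewrite mulmv_id. Qed.

Lemma Ap_step k x y i : Ap A k x y -> Ap A k.+1 x (mulmv (A i) y).
Proof.
move=> [j [M [hj [hM ->]]]]; exists j.+1, (mulmm (A i) M); split => //.
by split; [exists i, M | rewrite mulmvA].
Qed.

Lemma krylov_mono x k k' y : (k <= k')%N -> krylov x k y -> krylov x k' y.
Proof. by move=> hk; apply: span_mono => z; apply: Ap_mono. Qed.

(* A Krylov space that does not grow is invariant, hence everything. *)
Lemma krylov_stable x k : x <> vzero ->
  (forall y, krylov x k.+1 y -> krylov x k y) -> forall y, krylov x k y.
Proof.
move=> hx hst; case: (hirr (span_subspace (Ap A k x))) => [i y hy | h | //].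
- by apply: hst; apply: span_mulmv hy => z hz; apply: Ap_step.
- by exfalso; apply: hx; apply: h; apply: span_sub; apply: Ap_self.
Qed.

Lemma krylov_full x p : (0 < d)%N -> (d - 1 <= p)%N -> x <> vzero ->
  forall y, krylov x p y.
Proof.
move=> hd hp hx; apply: NNPP => /not_all_ex_not [y0 hy0].
have hfar : forall k, (k < d)%N -> ~ krylov x k y0.
  by move=> k hk h; apply: hy0; apply: krylov_mono h; apply: leq_trans hp; rewrite leq_subRL.
(* The chain {0} = Z_0, Z_(k+1) = V_k(x) for k < d, Z_(k+1) = R^d for k >= d
   would be strict at each of its first d+1 steps: x <> 0, V_k(x) grows as
   long as it is not everything, and y0 is not in V_(d-1)(x). *)
pose Z i y := if i is k.+1 then (d <= k)%N \/ krylov x k y else y = vzero.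
apply: (@subspace_chain_bound d Z).
- case=> [|k] /=.
    split => //; split => [_ _ -> ->|c _ ->]; apply: vext => j;
      by rewrite /vadd /vscale /vzero; ring.
  case: (leqP d k) => hk.
    by split; [left | split => *; left].
  have hk' : ~ (d <= k)%N by apply/negP; rewrite -ltnNge.
  have [h0 [ha hs]] := span_subspace (Ap A k x).
  split; [right | split]; first exact: h0.
    by move=> y z [/hk' []|hy] [/hk' []|hz]; right; apply: ha.
  by move=> c y [/hk' []|hy]; right; apply: hs.
- case=> [|k] y /=; first by move=> ->; right; apply: (span_subspace _).1.
  by case=> h; [left; apply: leqW | right; apply: krylov_mono h].
- case=> [|k] hk /=.
    by exists x; split; [right; apply: span_sub; apply: Ap_self | ].
  case: (ltngtP k.+1 d) hk => // hkd _; last first.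
    exists y0; split; first by left.
    case=> [|h]; first by rewrite -hkd ltnn.
    by apply: (hfar k _ h); rewrite -hkd.
  apply: NNPP => hne; apply: (hfar k (ltnW hkd)).
  apply: (krylov_stable hx) => y hy; apply: NNPP => hy'; apply: hne.
  exists y; split; first by right.
  by case=> [|//]; rewrite leqNgt (ltnW hkd).
Qed.
End Krylov.

Section Gram.
Variable d : nat.
Implicit Types (u v w : vec d) (vs : list (vec d)).

Definition inner u v := \big[Rplus/0]_(i < d) (u i * v i).

Lemma inner_sym u v : inner u v = inner v u.
Proof. by apply: eq_bigr => i _; ring. Qed.

Lemma inner_add u v w : inner u (vadd v w) = inner u v + inner u w.
Proof. by rewrite /inner -big_split /=; apply: eq_bigr => i _; rewrite /vadd; ring. Qed.

Lemma inner_scale u c v : inner u (vscale c v) = c * inner u v.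
Proof. by rewrite /inner big_distrr /=; apply: eq_bigr => i _; rewrite /vscale; ring. Qed.

Lemma inner_zero u : inner u vzero = 0.
Proof. by rewrite /inner big1 // => i _; rewrite /vzero; ring. Qed.

Lemma inner_comb u (l : list (R * vec d)) :
  inner u (comb l) = \big[Rplus/0]_(ws <- l) (ws.1 * inner u ws.2).
Proof.
elim: l => [|[w s] l IH] /=; first by rewrite big_nil inner_zero.
by rewrite big_cons inner_add inner_scale IH.
Qed.

Lemma inner_abs u v : Rabs (inner u v) <= l1 u * l1 v.
Proof.
apply: Rle_trans (sumR_abs _ _ _) _; rewrite /l1 big_distrl /=; apply: sumR_le => i _.
by rewrite Rabs_mult; apply: Rmult_le_compat_l; [apply: Rabs_pos | apply: l1_ge_coord].
Qed.

Lemma inner_self_eq0 u : inner u u = 0 -> u = vzero.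
Proof.
move=> h; apply: vext => i; rewrite /vzero.
have : u i * u i <= inner u u.
  rewrite /inner (bigD1 i) //=; set S := \big[_/_]_(_ | _) _.
  suff : 0 <= S by lra.
  by apply: sumR_ge0 => j _; nra.
by rewrite h => h1; nra.
Qed.

Lemma inner_cont (us vs : nat -> vec d) u v :
  (forall i, Un_cv (fun k => us k i) (u i)) -> (forall i, Un_cv (fun k => vs k i) (v i)) ->
  Un_cv (fun k => inner (us k) (vs k)) (inner u v).
Proof. by move=> hu hv; apply: cv_sumR => i _; apply: CV_mult. Qed.

Lemma inner_span u (S : vec d -> Prop) w :
  (forall v, S v -> inner v u = 0) -> span S w -> inner w u = 0.
Proof.
move=> h [l [hl ->]]; rewrite inner_sym inner_comb.
elim: l hl => [_|[c v] l IH /List.Forall_cons_iff [hv hl]]; first by rewrite big_nil.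
by rewrite big_cons IH //= inner_sym h //; ring.
Qed.

Lemma mulmv_cont (xs : nat -> vec d) x M :
  (forall i, Un_cv (fun k => xs k i) (x i)) -> forall i, Un_cv (fun k => mulmv M (xs k) i) (mulmv M x i).
Proof. by move=> hx i; apply: cv_sumR => j _; apply: CV_mult => //; apply: cv_const. Qed.

Definition gram vs : mat d := fun i k => \big[Rplus/0]_(v <- vs) (v i * v k).
Definition gram_form vs u := \big[Rplus/0]_(v <- vs) (inner v u * inner v u).

Lemma gram_comb vs u : mulmv (gram vs) u = comb [seq (inner v u, v) | v <- vs].
Proof.
elim: vs => [|v vs IH] /=.
  by apply: vext => i; rewrite /mulmv /gram /vzero big1 // => k _; rewrite big_nil; ring.
rewrite -IH; apply: vext => i; rewrite /mulmv /gram /vadd /vscale /inner.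
under eq_bigr => k _ do rewrite big_cons.
by rewrite big_distrl -big_split /=; apply: eq_bigr => k _; ring.
Qed.

Lemma gram_quadratic vs u : inner u (mulmv (gram vs) u) = gram_form vs u.
Proof. by rewrite gram_comb inner_comb !big_map; apply: eq_bigr => v _ /=; rewrite inner_sym. Qed.

Lemma gram_form_ge0 vs u : 0 <= gram_form vs u.
Proof. by apply: sumR_ge0 => v _; nra. Qed.

Lemma gram_form_eq0 vs u v : gram_form vs u = 0 -> List.In v vs -> inner v u = 0.
Proof.
move=> h hv.
have := @sumR_ge_term _ vs (fun v => inner v u * inner v u) v (fun y => ltac:(nra)) hv.
by rewrite -/(gram_form vs u) h => h1; nra.
Qed.
End Gram.

(* For the list O_p(x) of the vectors B x, B a product of length at most p,
   the Gram form is positive definite as soon as x <> 0 (the B x span R^d by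
   irreducibility), uniformly on the product of the l1 unit spheres. *)

Section OrbitGram.
Variables d r : nat.
Variable A : 'I_r -> mat d.
Hypothesis hd : (0 < d)%N.
Hypothesis hirr : irreducible A.
Variable p : nat.
Hypothesis hp : (d - 1 <= p)%N.

Definition prods_upto := List.flat_map (prods_list A) (List.seq 0 p.+1).

Lemma prods_uptoP B : List.In B prods_upto <-> exists k, (k <= p)%N /\ prods A k B.
Proof.
rewrite /prods_upto List.in_flat_map; split.
  move=> [k [hk /prods_listP hB]]; exists k; split => //.
  by move/List.in_seq: hk => [_ /= hk]; apply/leP; lia.
move=> [k [hk hB]]; exists k; split; last exact/prods_listP.
by apply/List.in_seq; split; [lia | move/leP: hk => /= hk; lia].
Qed.

Definition orbit_list x := [seq mulmv B x | B <- prods_upto].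
Definition orbit_form x u := gram_form (orbit_list x) u.

Lemma orbit_form_pos x u : x <> vzero -> u <> vzero -> 0 < orbit_form x u.
Proof.
move=> hx hu; case: (gram_form_ge0 (orbit_list x) u) => // h; exfalso; apply: hu.
apply: inner_self_eq0; apply: inner_span (krylov_full hirr hd hp hx u).
move=> _ [k [B [hk [hB ->]]]]; apply: (gram_form_eq0 (esym h)).
by apply: (In_map (fun B => mulmv B x)); apply/prods_uptoP; exists k.
Qed.

Lemma orbit_form_scale a b x u :
  orbit_form (vscale a x) (vscale b u) = (a * b) * (a * b) * orbit_form x u.
Proof.
rewrite /orbit_form /gram_form /orbit_list !big_map big_distrr /=; apply: eq_bigr => B _.
rewrite mulmv_scale inner_scale [inner (vscale a _) _]inner_sym inner_scale inner_sym; ring.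
Qed.

Lemma orbit_form_cont (xs us : nat -> vec d) x u :
  (forall i, Un_cv (fun k => xs k i) (x i)) -> (forall i, Un_cv (fun k => us k i) (u i)) ->
  Un_cv (fun k => orbit_form (xs k) (us k)) (orbit_form x u).
Proof.
move=> hx hu; rewrite /orbit_form /gram_form /orbit_list big_map.
apply: (Un_cv_ext (fun k => \big[Rplus/0]_(B <- prods_upto)
  (inner (mulmv B (xs k)) (us k) * inner (mulmv B (xs k)) (us k)))).
  by move=> k; rewrite big_map.
apply: cv_sumR => B _; have h := inner_cont (mulmv_cont B hx) hu.
exact: CV_mult.
Qed.

(* Compactness of the product of the unit spheres, coded as one vector
   indexed by 'I_d + 'I_d. *)
Lemma orbit_form_lower_unit :
  exists g, 0 < g /\ forall x u, l1 x = 1 -> l1 u = 1 -> g <= orbit_form x u.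
Proof.
pose zx (z : 'I_d + 'I_d -> R) : vec d := fun i => z (inl i).
pose zu (z : 'I_d + 'I_d -> R) : vec d := fun i => z (inr i).
pose P z := l1 (zx z) = 1 /\ l1 (zu z) = 1.
pose l := List.map inl (enum 'I_d) ++ List.map inr (enum 'I_d).
have hb : forall z, P z -> forall i, Rabs (z i) <= 1.
  by move=> z [h1 h2] [i|i]; [rewrite -h1; apply: (l1_ge_coord (zx z)) | rewrite -h2; apply: (l1_ge_coord (zu z))].
have hsphere : forall (zs : nat -> vec d) z, (forall k, l1 (zs k) = 1) ->
    (forall i, Un_cv (fun k => zs k i) (z i)) -> l1 z = 1.
  move=> zs z h1 h2; apply: (UL_sequence _ _ _ (l1_cont h2)).
  by apply: (Un_cv_ext (fun _ => 1)) => //; apply: cv_const.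
have hc : forall (zs : nat -> 'I_d + 'I_d -> R) z, (forall k, P (zs k)) ->
    (forall i, List.In i l -> Un_cv (fun k => zs k i) (z i)) ->
    P z /\ Un_cv (fun k => orbit_form (zx (zs k)) (zu (zs k))) (orbit_form (zx z) (zu z)).
  move=> zs z hP hcv.
  have hx : forall i, Un_cv (fun k => zx (zs k) i) (zx z i).
    move=> i; apply: hcv; apply: List.in_or_app; left; apply: List.in_map.
    by apply: In_mem; rewrite mem_enum.
  have hu : forall i, Un_cv (fun k => zu (zs k) i) (zu z i).
    move=> i; apply: hcv; apply: List.in_or_app; right; apply: List.in_map.
    by apply: In_mem; rewrite mem_enum.
  split; last exact: orbit_form_cont.
  by split; [apply: (hsphere _ _ (fun k => (hP k).1) hx) | apply: (hsphere _ _ (fun k => (hP k).2) hu)].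
have hpos : forall z, P z -> 0 < orbit_form (zx z) (zu z).
  by move=> z [h1 h2]; apply: orbit_form_pos => h; [move: h1 | move: h2]; rewrite h l1_zero; lra.
have [g [hg hge]] := compact_pos_lower_bound hb hc hpos.
exists g; split => // x u h1 h2.
pose z (i : 'I_d + 'I_d) := match i with inl j => x j | inr j => u j end.
exact: (hge z (conj h1 h2)).
Qed.

(* By homogeneity: g (|x|_1 |u|_1)^2 <= <u, G(O_p(x)) u>. *)
Lemma orbit_form_lower :
  exists g, 0 < g /\ forall x u, g * (l1 x * l1 u) * (l1 x * l1 u) <= orbit_form x u.
Proof.
have [g [hg hge]] := orbit_form_lower_unit.
exists g; split => // x u.
case: (classic (x = vzero)) => [->|hx].
  by rewrite l1_zero; have := gram_form_ge0 (orbit_list vzero) u; rewrite /orbit_form; nra.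
case: (classic (u = vzero)) => [->|hu].
  by rewrite l1_zero; have := gram_form_ge0 (orbit_list x) vzero; rewrite /orbit_form; nra.
have hx' := l1_pos hx; have hu' := l1_pos hu.
have := hge _ _ (l1_normalize hx) (l1_normalize hu); rewrite orbit_form_scale.
set q := l1 x * l1 u; have hq : 0 < q by rewrite /q; nra.
have -> : / l1 x * / l1 u = / q by rewrite /q; field; lra.
move=> h; have := Rmult_le_compat_l (q * q) _ _ ltac:(nra) h.
have -> : q * q * (/ q * / q * orbit_form x u) = orbit_form x u by field; lra.
nra.
Qed.

Local Notation G x := (gram (orbit_list x)).

Lemma widen_unlift (j : 'I_d) : unlift ord_max (widen_ord (leqnSn d) j) = Some j.
Proof.
have -> : widen_ord (leqnSn d) j = lift ord_max j by apply: val_inj; rewrite [RHS]lift_max.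
exact: liftK.
Qed.

(* The positive definite matrix G(O_p(x)) is onto: a dependence relation
   between its d columns and y must involve y. *)
Lemma gram_onto x : x <> vzero -> forall y, exists u, mulmv (G x) u = y.
Proof.
move=> hx y.
pose w (i : 'I_d.+1) : vec d := fun k =>
  if unlift ord_max i is Some j then G x k j else y k.
have [c [[i1 hi1] hc]] := linear_dependence w.
pose c' : vec d := fun j => c (widen_ord (leqnSn d) j).
have key : forall k, mulmv (G x) c' k + c ord_max * y k = 0.
  move=> k; rewrite -(hc k) big_ord_recr /= /w unlift_none; congr (_ + _).
  by rewrite /mulmv; apply: eq_bigr => j _; rewrite widen_unlift /c'; ring.
case: (Req_dec (c ord_max) 0) => hcm.
  exfalso; have hz : mulmv (G x) c' = vzero.
    by apply: vext => k; have := key k; rewrite hcm /vzero; lra.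
  have hf : orbit_form x c' = 0 by rewrite /orbit_form -gram_quadratic hz inner_zero.
  case: (classic (c' = vzero)) => hc'; last by have := orbit_form_pos hx hc'; lra.
  case: (unliftP ord_max i1) hi1 => [j ->|->] // h; apply: h.
  have := congr1 (fun v => v j) hc'; rewrite /c' /vzero.
  by have -> : lift ord_max j = widen_ord (leqnSn d) j by apply: val_inj; rewrite [LHS]lift_max.
exists (vscale (- / c ord_max) c'); rewrite mulmv_scale; apply: vext => k.
have := key k; rewrite /vscale => hk.
by rewrite (_ : mulmv (G x) c' k = - (c ord_max * y k)); [field | lra].
Qed.
End OrbitGram.

(* Convex hulls.  A combination with total absolute weight at most 1 of
   vectors v such that v and -v lie in S is in conv S, provided S contains a
   pair a, -a (used to pad the weights up to 1). *)

Section Convex.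
Variable d : nat.

Lemma conv_signed_comb (S : vec d -> Prop) (a : vec d) (l : list (R * vec d)) :
  S a -> S (vopp a) -> List.Forall (fun ws => S ws.2 /\ S (vopp ws.2)) l ->
  \big[Rplus/0]_(ws <- l) Rabs ws.1 <= 1 -> conv S (comb l).
Proof.
move=> ha hna hl hsum; set t := 1 - \big[Rplus/0]_(ws <- l) Rabs ws.1.
pose signed ws : R * vec d :=
  if Rle_dec 0 ws.1 then (ws.1, ws.2) else (- ws.1, vopp ws.2).
exists ([seq signed ws | ws <- l] ++ (t / 2, a) :: (t / 2, vopp a) :: nil); split; [|split].
- have ht : 0 <= t / 2 by rewrite /t; lra.
  apply List.Forall_app; split; last by constructor; [by split | constructor; [by split | constructor]].
  apply List.Forall_forall => ws hws; have [[w v] [hin ->]] := In_map_inv hws.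
  have /= [hv hnv] := (List.Forall_forall _ _).1 hl _ hin.
  by rewrite /signed; case: Rle_dec => /= hw; split => //; lra.
- rewrite wsum_cat wsum_big big_map /= -/t.
  suff -> : \big[Rplus/0]_(ws <- l) (signed ws).1 = \big[Rplus/0]_(ws <- l) Rabs ws.1.
    by rewrite /t; field.
  apply: eq_bigr => -[w v] _; rewrite /signed; case: Rle_dec => /= hw.
    by rewrite Rabs_right //; lra.
  by rewrite Rabs_left //; lra.
- rewrite comb_cat; apply: vext => k; rewrite /= /vadd /vscale /vopp /vzero !comb_coord big_map.
  suff -> : \big[Rplus/0]_(ws <- l) ((signed ws).1 * (signed ws).2 k)
          = \big[Rplus/0]_(ws <- l) (ws.1 * ws.2 k) by ring.
  by apply: eq_bigr => -[w v] _; rewrite /signed; case: Rle_dec => /= hw; rewrite /vopp; ring.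
Qed.

Lemma N_mulmv_comb (N : vec d -> R) (M : mat d) beta (l : list (R * vec d)) :
  is_norm N -> List.Forall (fun ws => 0 <= ws.1 /\ N (mulmv M ws.2) <= beta) l ->
  N (mulmv M (comb l)) <= beta * wsum l.
Proof.
move=> hN; elim: l => [|[w s] l IH] hl /=; first by rewrite mulmv_zero (N_zero hN); lra.
move/List.Forall_cons_iff: hl => [/= [hw hs] hl].
rewrite mulmv_add mulmv_scale; apply: Rle_trans (norm_triangle hN _ _) _.
rewrite (N_scale_pos hN _ hw).
by have := IH hl; have := Rmult_le_compat_l _ _ _ hw hs; lra.
Qed.
Lemma conv_mulmv_witness (N : vec d -> R) (S : vec d -> Prop) (M : mat d) beta y :
  is_norm N -> conv S y -> beta < N (mulmv M y) -> exists v, S v /\ beta < N (mulmv M v).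
Proof.
move=> hN [l [hl [hw ->]]] hlt; apply: NNPP => hne.
suff : N (mulmv M (comb l)) <= beta * wsum l by rewrite hw; lra.
apply: N_mulmv_comb => //; apply List.Forall_forall => ws hin.
have [hw0 hS] := (List.Forall_forall _ _).1 hl ws hin; split => //.
by apply: Rnot_lt_le => h; apply: hne; exists ws.2.
Qed.
End Convex.

(* Uniformly in the unit vector x, a ball around 0 is contained in the convex
   hull of A_p(x) and A_p(-x): solve G(O_p(x)) u = y, so that
   y = sum_B <B x, u> B x, with coefficients controlled by N y. *)

Section Absorption.
Variables d r : nat.
Variable A : 'I_r -> mat d.
Variable N : vec d -> R.
Hypothesis hN : is_norm N.
Hypothesis hd : (0 < d)%N.
Hypothesis hirr : irreducible A.
Variable p : nat.
Hypothesis hp : (d - 1 <= p)%N.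

Local Notation G x := (gram (orbit_list A p x)).

(* l1 u <= K N (G u) uniformly in the unit x, from the Gram lower bound
   g |x|^2 |u|^2 <= <u, G u> <= |u| |G u| (l1 norms) and |x| >= 1 / C. *)
Lemma gram_inverse_bound :
  exists K, 0 <= K /\ forall x u, N x = 1 -> l1 u <= K * N (mulmv (G x) u).
Proof.
have [c [hc hcN]] := N_ge_l1 hN; have [g [hg hge]] := orbit_form_lower hd hirr hp.
set C := N_l1_const N; have hC : 0 <= C := N_l1_const_ge0 hN.
have hK : 0 <= C * C / (g * c) by apply: Rmult_le_pos; [nra | apply: Rlt_le; apply: Rinv_0_lt_compat; nra].
exists (C * C / (g * c)); split => // x u hx; set y := mulmv (G x) u.
have hsx : 1 <= C * l1 x by rewrite -hx; apply: N_le_l1.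
have hform : g * (l1 x * l1 u) * (l1 x * l1 u) <= l1 u * l1 y.
  apply: Rle_trans (hge x u) _; rewrite /orbit_form -gram_quadratic.
  exact: Rle_trans (Rle_abs _) (inner_abs _ _).
have hy : c * l1 y <= N y := hcN y.
have hx0 := l1_ge0 x; have hu0 := l1_ge0 u; have hy0 := l1_ge0 y.
case: (Req_dec (l1 u) 0) => hu; first by rewrite hu; have := N_ge0 hN y; nra.
have hu' : 0 < l1 u by lra.
have hgu : g * (l1 x * l1 x) * l1 u <= l1 y by apply: (Rmult_le_reg_l (l1 u)) => //; nra.
have hgC : g * l1 u <= C * C * l1 y.
  have hx1 : 1 <= C * C * (l1 x * l1 x) by nra.
  by have := Rmult_le_compat_l (g * l1 u) _ _ ltac:(nra) hx1; nra.
apply: (Rmult_le_reg_l (g * c)); first nra.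
have -> : g * c * (C * C / (g * c) * N y) = C * C * N y by field; lra.
by have := Rmult_le_compat_l (C * C) _ _ ltac:(nra) hy; nra.
Qed.

Lemma orbit_coef_bound :
  exists K, 0 <= K /\ forall x u, N x = 1 ->
    \big[Rplus/0]_(B <- prods_upto A p) Rabs (inner (mulmv B x) u) <= K * N (mulmv (G x) u).
Proof.
have [c [hc hcN]] := N_ge_l1 hN; have [K [hK hKu]] := gram_inverse_bound.
pose Bp := \big[Rplus/0]_(B <- prods_upto A p) opnorm N B.
have hBp0 : 0 <= Bp by apply: sumR_ge0 => B _; apply: opnorm_ge0.
pose m := INR (size (prods_upto A p)); have hm : 0 <= m := pos_INR _.
exists (m * (Bp / c) * K); split.
  by apply: Rmult_le_pos => //; apply: Rmult_le_pos => //; apply: Rmult_le_pos => //; apply: Rlt_le; apply: Rinv_0_lt_compat.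
move=> x u hx; have hBc : 0 <= Bp / c by apply: Rmult_le_pos => //; apply: Rlt_le; apply: Rinv_0_lt_compat.
have hw : forall B, List.In B (prods_upto A p) -> Rabs (inner (mulmv B x) u) <= Bp / c * l1 u.
  move=> B hB; apply: Rle_trans (inner_abs _ _) _; apply: Rmult_le_compat_r; first exact: l1_ge0.
  have h1 := hcN (mulmv B x); have h2 := opnorm_ge hN hd B x; rewrite hx Rmult_1_r in h2.
  have h3 : opnorm N B <= Bp by apply: sumR_ge_term => // M; apply: opnorm_ge0.
  by apply: (Rmult_le_reg_l c) => //; field_simplify; lra.
apply: Rle_trans (sumR_le_size hw) _; rewrite -/m Rmult_assoc Rmult_assoc.
by apply: Rmult_le_compat_l => //; apply: Rmult_le_compat_l => //; apply: hKu.
Qed.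

Lemma uniform_absorption : exists delta, 0 < delta /\
  forall x, N x = 1 -> forall y, N y <= delta -> conv (fun z => Ap A p x z \/ Ap A p (vopp x) z) y.
Proof.
have [K [hK hcoef]] := orbit_coef_bound.
exists (/ (K + 1)); split; first by apply: Rinv_0_lt_compat; lra.
move=> x hx y hy.
have hx0 : x <> vzero by move=> h; rewrite h (N_zero hN) in hx; lra.
have [u hu] := gram_onto hd hirr hp hx0 y.
rewrite -hu gram_comb; apply: (conv_signed_comb (a := x)).
- by left; apply: Ap_self.
- by right; apply: Ap_self.
- apply List.Forall_forall => ws hws; have [v [hv ->]] := In_map_inv hws.
  have [B [hB ->]] := In_map_inv hv.
  have [k [hk hBk]] := (prods_uptoP A p B).1 hB.
  by split; [left | right; rewrite -mulmv_opp]; exists k, B.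
- rewrite big_map /orbit_list big_map; apply: Rle_trans (hcoef x u hx) _; rewrite hu.
  have hNy := N_ge0 hN y.
  have : K * N y <= K * / (K + 1) by apply: Rmult_le_compat_l.
  have : K * / (K + 1) < 1 by apply: (Rmult_lt_reg_r (K + 1)); [lra | field_simplify; lra].
  lra.
Qed.
End Absorption.

(* These radii are bounded by sum_(k<=p) ||A^k||
   and, by uniform absorption, bounded below by a positive constant. *)

Section MeasureOfIrreducibility.
Variables d r : nat.
Variable A : 'I_r -> mat d.
Variable N : vec d -> R.
Hypothesis hN : is_norm N.
Hypothesis hd : (0 < d)%N.
Hypothesis hr : (0 < r)%N.
Variable p : nat.

Local Notation normA k := (setnorm_pow N A k).

Definition absorbed x t := 0 <= t /\
  forall y, N y <= t -> conv (fun z => Ap A p x z \/ Ap A p (vopp x) z) y.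
Definition absorb_radius x := sup (absorbed x).

Lemma chiE : chi N A p = inf (fun c => exists x, N x = 1 /\ c = absorb_radius x).
Proof. by []. Qed.

Definition normA_upto := \big[Rplus/0]_(k <- iota 0 p.+1) normA k.

Lemma normA_le_upto k : (k <= p)%N -> normA k <= normA_upto.
Proof.
move=> hk; apply: sumR_ge_term; first by move=> j; apply: normA_ge0.
by apply: In_mem; rewrite mem_iota add0n ltnS.
Qed.

(* Points of A_p(x) and A_p(-x) have norm at most normA_upto for unit x,
   and the absorbed ball is inside their convex hull. *)
Lemma absorbed_le x t : N x = 1 -> absorbed x t -> t <= normA_upto.
Proof.
move=> hx1 [ht h]; have [x0 hx0] := N_unit_ex hN hd.
have hy : N (vscale t x0) <= t by rewrite N_scale_pos // hx0; lra.
have [l [hl [hw he]]] := h _ hy.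
suff : N (mulmv idm (comb l)) <= normA_upto * wsum l.
  by rewrite mulmv_id -he hw N_scale_pos // hx0; lra.
apply: N_mulmv_comb => //; apply: List.Forall_impl hl => -[w s] /= [hw0 hs]; split => //; rewrite mulmv_id.
have hop : forall k M, (k <= p)%N -> prods A k M -> opnorm N M <= normA_upto.
  by move=> k M hk hM; apply: Rle_trans (normA_le_upto hk); apply: normA_ge.
case: hs => [[k [M [hk [hM ->]]]] | [k [M [hk [hM ->]]]]];
  apply: Rle_trans (opnorm_ge hN hd M _) _; rewrite ?(N_opp hN) hx1 Rmult_1_r; exact: hop hk hM.
Qed.

Lemma absorbed0 x : absorbed x 0.
Proof.
split => [|y hy]; first lra.
have -> : y = vzero by apply: (norm_def hN); have := N_ge0 hN y; lra.
exists ((/2, x) :: (/2, vopp x) :: nil); split; [|split].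
- constructor; first by split => /=; [lra | left; apply: Ap_self].
  constructor; first by split => /=; [lra | right; apply: Ap_self].
  by constructor.
- by rewrite /=; field.
- by apply: vext => k; rewrite /= /vadd /vscale /vopp /vzero; field.
Qed.

Lemma absorb_radius_is_lub x : N x = 1 -> is_lub (absorbed x) (absorb_radius x).
Proof.
move=> hx1; apply: sup_is_lub; first by exists 0; apply: absorbed0.
by exists normA_upto => t; apply: absorbed_le.
Qed.

Lemma chi_le_radius x : N x = 1 -> chi N A p <= absorb_radius x.
Proof.
move=> hx1; rewrite chiE; apply: inf_lower; last by exists x.
exists 0 => c [x' [hx' ->]]; have [h _] := absorb_radius_is_lub hx'.
by apply: h; apply: absorbed0.
Qed.

Lemma absorbed_above t x : t < chi N A p -> N x = 1 -> exists t', absorbed x t' /\ t < t'.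
Proof.
move=> ht hx1; apply: sup_approx; first by exists 0; apply: absorbed0.
  by exists normA_upto => t0; apply: absorbed_le.
exact: Rlt_le_trans ht (chi_le_radius hx1).
Qed.

Lemma chi_pos : irreducible A -> (d - 1 <= p)%N -> 0 < chi N A p.
Proof.
move=> hirr hp; have [dl [hdl habs]] := uniform_absorption hN hd hirr hp.
apply: (Rlt_le_trans _ _ _ hdl); rewrite chiE; apply: inf_greatest.
  by have [x hx1] := N_unit_ex hN hd; exists (absorb_radius x), x.
move=> c [x [hx1 ->]]; have [h _] := absorb_radius_is_lub hx1.
by apply: h; split; [lra | apply: habs].
Qed.
End MeasureOfIrreducibility.

(* Amplification: for t < chi and s < ||A^n||, every x <> 0 is sent by some
   product M B (M of length n, B of length k <= p) to norm > t s N x: absorb a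
   ball of radius t into conv(A_p(x) u A_p(-x)), take M and a unit z with
   N (M z) > s, and find a vertex +-B x of the hull where M is large. *)

Section Amplification.
Variables d r : nat.
Variable A : 'I_r -> mat d.
Variable N : vec d -> R.
Hypothesis hN : is_norm N.
Hypothesis hd : (0 < d)%N.
Hypothesis hr : (0 < r)%N.
Variables n p : nat.
Hypothesis hn : (0 < n)%N.

Local Notation normA k := (setnorm_pow N A k).

Lemma amplify t s x : 0 < t < chi N A p -> 0 < s < normA n -> x <> vzero ->
  exists k M B, (k <= p)%N /\ prods A n M /\ prods A k B /\
    t * s * N x < N (mulmv M (mulmv B x)).
Proof.
move=> [ht0 ht] [hs0 hs] hx0; have hNx := N_pos hN hx0.
have hinv : 0 <= / N x by apply: Rlt_le; apply: Rinv_0_lt_compat.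
pose x' := vscale (/ N x) x; have hx'1 : N x' = 1 := N_normalize hN hx0.
have [t' [[ht'0 hconv] htt']] := absorbed_above hN hd hr ht hx'1.
have [M [hM hsM]] := normA_approx hN hd hr hs.
have [z [hz hsz]] := opnorm_approx hN hd hsM.
have hy : N (vscale t z) <= t' by rewrite (N_scale_pos hN) ?hz; lra.
have hMy : t * s < N (mulmv M (vscale t z)).
  by rewrite mulmv_scale (N_scale_pos hN); [apply: Rmult_lt_compat_l | lra].
have [w [hw hMw]] := conv_mulmv_witness hN (hconv _ hy) hMy.
have scale_back : forall k B, (k <= p)%N -> prods A k B ->
    t * s < N (mulmv M (mulmv B x')) ->
    t * s * N x < N (mulmv M (mulmv B x)).
  move=> k B hk hB; rewrite /x' !mulmv_scale (N_scale_pos hN) // => h.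
  have := Rmult_lt_compat_l (N x) _ _ hNx h.
  have -> : N x * (/ N x * N (mulmv M (mulmv B x))) = N (mulmv M (mulmv B x)) by field; lra.
  lra.
case: hw hMw => [[k [B [hk [hB ->]]]] | [k [B [hk [hB ->]]]]] hMw;
  exists k, M, B; split => //; split => //; split => //.
  exact: scale_back hk hB hMw.
by apply: scale_back hk hB _; rewrite -(N_opp hN) -!mulmv_opp.
Qed.

Lemma chain_of_steps c q : 0 < c ->
  (forall x, x <> vzero -> exists L P, (n <= L)%N /\ (L <= n + q)%N /\ prods A L P /\
     c * N x <= N (mulmv P x)) ->
  forall j, exists L, (j * n <= L)%N /\ (L <= j * (n + q))%N /\ c ^ j <= normA L.
Proof.
move=> hc hstep; have [x0 hx0] := N_unit_ex hN hd.
have chain : forall j, exists L P, (j * n <= L)%N /\ (L <= j * (n + q))%N /\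
    prods A L P /\ c ^ j <= N (mulmv P x0).
  elim=> [|j [L [P [h1 [h2 [hP hcj]]]]]].
    by exists 0%N, idm; rewrite mulmv_id hx0 /=; do !split => //; lra.
  have hv : mulmv P x0 <> vzero.
    by move=> h; rewrite h (N_zero hN) in hcj; have := pow_lt _ j hc; lra.
  have [L' [P' [h1' [h2' [hP' hc']]]]] := hstep _ hv.
  exists (L' + L)%N, (mulmm P' P); split; [|split; [|split]].
  - by rewrite mulSn; apply: leq_add.
  - by rewrite mulSn; apply: leq_add.
  - exact: prods_mul.
  - by rewrite mulmvA /=; have := Rmult_le_compat_l _ _ _ (Rlt_le _ _ hc) hcj; lra.
move=> j; have [L [P [h1 [h2 [hP hcj]]]]] := chain j; exists L; do 2!split => //.
apply: Rle_trans hcj _; apply: Rle_trans (opnorm_ge_unit hN hd P hx0) _.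
exact: normA_ge hP.
Qed.

Lemma chain_bound_eta t s : 0 < t < chi N A p -> 0 < s < normA n ->
  t * s <= Rmax (jsr N A ^ n) (jsr N A ^ (n + p)).
Proof.
move=> ht hs; have hc : 0 < t * s by nra.
apply: (jsr_chain_lower_bound hN hd hr hc hn); apply: (chain_of_steps hc) => x hx.
have [k [M [B [hk [hM [hB hamp]]]]]] := amplify ht hs hx.
exists (n + k)%N, (mulmm M B); rewrite leq_addr leq_add2l mulmvA.
by do !split => //; [apply: prods_mul | lra].
Qed.

Lemma normA_le_max k : (k <= p)%N -> normA k <= Rmax 1 (normA 1 ^ p).
Proof.
move=> hk; apply: Rle_trans (normA_pow A hN hd hr k) _.
have h1 := normA_ge0 A hN hd hr 1.
case: (Rle_lt_dec (normA 1) 1) => hb.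
  by apply: Rle_trans (Rmax_l _ _); rewrite -(pow1 k); apply: pow_incr; lra.
by apply: Rle_trans (Rmax_r _ _); apply: Rle_pow; [lra | apply/leP].
Qed.

(* Second chain: split M B = X Y with Y of length exactly n; X has length
   at most p and so norm at most D = max(1, ||A||^p), hence a gain t s / D. *)
Lemma chain_bound_nu t s : 0 < t < chi N A p -> 0 < s < normA n ->
  t * s / Rmax 1 (normA 1 ^ p) <= jsr N A ^ n.
Proof.
move=> ht hs; set D := Rmax 1 (normA 1 ^ p); have hD : 1 <= D := Rmax_l _ _.
have hc : 0 < t * s / D by apply: Rdiv_lt_0_compat; nra.
suff : t * s / D <= Rmax (jsr N A ^ n) (jsr N A ^ (n + 0)) by rewrite addn0 Rmax_left; lra.
apply: (jsr_chain_lower_bound hN hd hr hc hn); apply: (chain_of_steps hc) => x hx.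
have [k [M [B [hk [hM [hB hamp]]]]]] := amplify ht hs hx.
have hMB := prods_mul hM hB; rewrite addnC in hMB.
have [X [Y [hX [hY e]]]] := prods_split hMB.
exists n, Y; rewrite addn0; do !split => //.
have hXY : N (mulmv M (mulmv B x)) <= D * N (mulmv Y x).
  rewrite -mulmvA e mulmvA; apply: Rle_trans (opnorm_ge hN hd X _) _.
  apply: Rmult_le_compat_r; first exact: N_ge0.
  exact: Rle_trans (normA_ge hN hd hr hX) (normA_le_max hk).
apply: (Rmult_le_reg_l D); first lra.
have -> : D * (t * s / D * N x) = t * s * N x by field; lra.
lra.
Qed.
End Amplification.

Lemma Rmax_pow_split x n p : 0 <= x -> Rmax (x ^ n) (x ^ (n + p)) = x ^ n * Rmax 1 (x ^ p).
Proof.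
move=> hx; rewrite pow_add; have h1 := pow_le x n hx; have h2 := pow_le x p hx.
by rewrite /Rmax; case: Rle_dec => h3; case: Rle_dec => h4; nra.
Qed.

Lemma Rroot_le_of_chi_bound chi a E rho n : (0 < n)%N -> 0 < chi -> 0 < a -> 0 < E ->
  0 < rho -> chi * a <= E * rho ^ n -> Rroot n a <= Rroot n (E / chi) * rho.
Proof.
move=> hn hchi ha hE hrho h; apply: Rroot_le_mul => //; first exact: Rdiv_lt_0_compat.
apply: (Rmult_le_reg_l chi) => //.
by have -> : chi * (E / chi * rho ^ n) = E * rho ^ n by field; lra.
Qed.

Section MainBounds.
Variables d r : nat.
Variable A : 'I_r -> mat d.
Variable N : vec d -> R.
Hypothesis hN : is_norm N.
Hypothesis hd : (0 < d)%N.
Hypothesis hr : (0 < r)%N.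
Hypothesis hirr : irreducible A.
Variables n p : nat.
Hypothesis hn : (0 < n)%N.
Hypothesis hp : (d - 1 <= p)%N.

Local Notation normA k := (setnorm_pow N A k).
Local Notation rho := (jsr N A).

Lemma chi_normA_le_eta : chi N A p * normA n <= Rmax 1 (rho ^ p) * rho ^ n.
Proof.
have hchi := chi_pos hN hd hr hirr hp.
rewrite [X in _ <= X]Rmult_comm -Rmax_pow_split; last exact: jsr_ge0.
case: (normA_ge0 A hN hd hr n) => hb; last first.
  by rewrite -hb Rmult_0_r; apply: Rle_trans (Rmax_l _ _); apply: pow_le; apply: jsr_ge0.
rewrite Rmult_comm; apply: mul_le_of_forall_lt => //; first lra.
move=> s hs; rewrite Rmult_comm; apply: mul_le_of_forall_lt => //; first lra.
by move=> t ht; apply: chain_bound_eta.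
Qed.

Lemma chi_normA_le_nu : chi N A p * normA n <= Rmax 1 (normA 1 ^ p) * rho ^ n.
Proof.
have hchi := chi_pos hN hd hr hirr hp; set D := Rmax 1 (normA 1 ^ p).
have hD : 1 <= D := Rmax_l _ _.
case: (normA_ge0 A hN hd hr n) => hb; last first.
  by rewrite -hb Rmult_0_r; apply: Rmult_le_pos; [lra | apply: pow_le; apply: jsr_ge0].
rewrite Rmult_comm; apply: mul_le_of_forall_lt => //; first lra.
move=> s hs; rewrite Rmult_comm; apply: mul_le_of_forall_lt => //; first lra.
move=> t ht; have := chain_bound_nu hN hd hr hn ht hs; rewrite -/D => h.
apply: (Rmult_le_reg_r (/ D)); first by apply: Rinv_0_lt_compat; lra.
by have -> : D * rho ^ n * / D = rho ^ n by field; lra.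
Qed.

Lemma jsr_pos : 0 < normA n -> 0 < rho.
Proof.
move=> hb; have hchi := chi_pos hN hd hr hirr hp.
case: (jsr_ge0 A hN hd hr) => // h0; have := chi_normA_le_nu.
by rewrite -h0 pow_i; [nra | apply/ltP].
Qed.
End MainBounds.

Theorem theorem1 (d r : nat) (A : 'I_r -> mat d) (N : vec d -> R)
  (hd : (0 < d)%nat) (hr : (0 < r)%nat)
  (hN : is_norm N) (hirr : irreducible A) (n p : nat)
  (hn : (1 <= n)%nat) (hp : (d - 1 <= p)%nat) :
  let rho := jsr N A in
  let An := Rroot n (setnorm_pow N A n) in
  let eta := Rmax 1 (rho ^ p) / chi N A p in
  let nu := Rmax 1 (setnorm N A ^ p) / chi N A p in
  (rho <= An /\ An <= Rroot n eta * rho) /\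
  (/ Rroot n nu * An <= rho /\ rho <= An).
Proof.
move=> rho An eta nu.
have hchi := chi_pos hN hd hr hirr hp.
have hrho_An : rho <= An := jsr_le_rootA A hN hd hr hn.
(* If ||A^n|| = 0 then ||A^n||^(1/n) = 0 and all bounds are trivial. *)
case: (Rle_dec (setnorm_pow N A n) 0) => ha.
  have hAn : An = 0 by apply: Rroot_nonpos.
  split; split => //; rewrite hAn; last by rewrite Rmult_0_r; apply: jsr_ge0.
  by apply: Rmult_le_pos; [apply: Rroot_ge0 | apply: jsr_ge0].
have hrho : 0 < rho by apply: (jsr_pos hN hd hr hirr hn hp); lra.
have hE1 : 0 < Rmax 1 (rho ^ p) by have := Rmax_l 1 (rho ^ p); lra.
have hE2 : 0 < Rmax 1 (setnorm N A ^ p) by have := Rmax_l 1 (setnorm N A ^ p); lra.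
have hA_nu : An <= Rroot n nu * rho.
  apply: Rroot_le_of_chi_bound => //; first lra.
  by rewrite setnormE; apply: chi_normA_le_nu.
have hroot_nu : 0 < Rroot n nu by rewrite Rroot_pos; [apply: exp_pos | apply: Rdiv_lt_0_compat].
split; split => //.
  by apply: Rroot_le_of_chi_bound => //; [lra | apply: chi_normA_le_eta].
apply: (Rmult_le_reg_l (Rroot n nu)) => //.
by rewrite -Rmult_assoc Rinv_r ?Rmult_1_l //; lra.
Qed.
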